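(* For any $\epsilon>0$ and $\sigma>0$ there exists an initial datum $a_0$ with $\int_{-\pi}^\pi a_0(x)dx=0$ and $$\|a_0-\cos(\cdot)\|_{C^{2-\epsilon}([-\pi,\pi])}\le\sigma$$ such that for every $\mu\in\mathbb R\setminus\{0\}$ there is no global-in-time solution $a$ of $$\partial_t a+\Big(\int_{-\pi}^x a(t,\bar x)\,d\bar x\Big)\partial_x a-a^2+\frac1\pi\int_{-\pi}^{\pi}a^2\,dx=0,\qquad x\in[-\pi,\pi],$$ with $\int_{-\pi}^\pi a(t,x)dx=0$ and $a(0,\cdot)=a_0$, satisfying $\|a(t,\cdot)-\mu\cos(\cdot)\|_{L^\infty([-\pi,\pi])}\to0$ as $t\to\infty$.
   Context: $C^{2-\epsilon}$ denotes the Hölder space of that order on $[-\pi,\pi]$. *)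

From Stdlib Require Import Reals Lra.
From Coquelicot Require Import Coquelicot.
Open Scope R_scope.

Definition Ipi (x : R) : Prop := - PI <= x <= PI.

Definition deriv_on_Ipi (f g : R -> R) : Prop :=
  forall x, Ipi x -> forall eta, 0 < eta -> exists delta, 0 < delta /\
    forall y, Ipi y -> 0 < Rabs (y - x) < delta ->
      Rabs ((f y - f x) / (y - x) - g x) <= eta.

Definition sup_le (f : R -> R) (A : R) : Prop :=
  forall x, Ipi x -> Rabs (f x) <= A.

Definition holder_semi_le (alpha : R) (f : R -> R) (C : R) : Prop :=
  forall x y, Ipi x -> Ipi y -> x <> y ->
    Rabs (f x - f y) <= C * Rpower (Rabs (x - y)) alpha.

(* f belongs to C^s([-pi,pi]) (0 < s < 2) and ||f||_{C^s} <= sigma, where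
   for 0 < s <= 1 : ||f|| = sup|f| + [f]_{s}             (space C^{0,s})
   for 1 < s < 2  : ||f|| = sup|f| + sup|f'| + [f']_{s-1} (space C^{1,s-1}).
   (Norm <= sigma is unfolded as: there are bounds for each sup summing to <= sigma.) *)
Definition holder_norm_le (s : R) (f : R -> R) (sigma : R) : Prop :=
  (s <= 1 /\ exists A C, sup_le f A /\ holder_semi_le s f C /\ A + C <= sigma)
  \/
  (1 < s /\ exists g A B C, deriv_on_Ipi f g /\ sup_le f A /\ sup_le g B /\
       holder_semi_le (s - 1) g C /\ A + B + C <= sigma).

Definition cont_on_domain (a : R -> R -> R) : Prop :=
  forall t x, 0 <= t -> Ipi x -> forall eta, 0 < eta -> exists delta, 0 < delta /\
    forall s y, 0 <= s -> Ipi y -> Rabs (s - t) < delta -> Rabs (y - x) < delta ->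
      Rabs (a s y - a t x) < eta.

Definition global_solution (a : R -> R -> R) (a0 : R -> R) : Prop :=
  (forall x, Ipi x -> a 0 x = a0 x) /\
  cont_on_domain a /\
  (forall t, 0 <= t -> RInt (a t) (- PI) PI = 0) /\
  exists ax at_ : R -> R -> R,
    (forall t, 0 <= t -> deriv_on_Ipi (a t) (ax t)) /\
    cont_on_domain ax /\
    (forall t x, 0 < t -> Ipi x -> is_derive (fun s => a s x) t (at_ t x)) /\
    (forall t x, 0 < t -> Ipi x ->
       at_ t x + RInt (a t) (- PI) x * ax t x - (a t x) ^ 2
       + / PI * RInt (fun y => (a t y) ^ 2) (- PI) PI = 0).

Definition converges_to_mu_cos (a : R -> R -> R) (mu : R) : Prop :=
  forall eta, 0 < eta -> exists T, forall t, T <= t -> forall x, Ipi x ->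
    Rabs (a t x - mu * cos x) <= eta.

(* Flatten the crest of [cos] into a plateau of width [2 del] (a C^{1,1}
   perturbation of size O(del), hence O(del^eps) in C^{2-eps}).  Along a
   solution put M(t) = max a(t,.) and I(t) = int (M(t) + th - a(t,x))^(-1/4) dx.
   At a maximum the transport term vanishes, so M' <= M^2 - c(t); integrating
   the transport term by parts against u = int a bounds the lower Dini
   derivative of I below by an explicit integral.  Hence I decays at most
   exponentially on bounded time intervals, starting from I(0) >= 2 del th^(-1/4)
   thanks to the plateau, and once a is close to mu cos it grows at least like
   exp(|mu| t / 4).  Since I <= 2 pi th^(-1/4) at all times, a small enough th
   gives a contradiction. *)

From Stdlib Require Import Reals Lra Classical ClassicalEpsilon.
From Coquelicot Require Import Coquelicot.
Open Scope R_scope.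

Lemma PI_gt_3 : 3 < PI.
Proof. pose proof PI2_3_2; lra. Qed.

Definition clamp (a b x : R) : R := Rmax a (Rmin b x).

Lemma clamp_in a b x : a <= b -> a <= clamp a b x <= b.
Proof. unfold clamp, Rmax, Rmin; intros; repeat destruct Rle_dec; lra. Qed.

Lemma clamp_id a b x : a <= x <= b -> clamp a b x = x.
Proof. unfold clamp, Rmax, Rmin; intros; repeat destruct Rle_dec; lra. Qed.

Lemma clamp_lip a b x y : Rabs (clamp a b x - clamp a b y) <= Rabs (x - y).
Proof. unfold clamp, Rmax, Rmin; intros; repeat destruct Rle_dec; split_Rabs; lra. Qed.

Lemma locally_interior (P : R -> Prop) a b x :
  a < x < b -> (forall y, a < y < b -> P y) -> locally x P.
Proof.
  intros Hx HP. assert (Hm : 0 < Rmin (x - a) (b - x)) by (apply Rmin_pos; lra).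
  exists (mkposreal _ Hm). intros y Hy. change (Rabs (y - x) < Rmin (x - a) (b - x)) in Hy.
  pose proof (Rmin_l (x - a) (b - x)). pose proof (Rmin_r (x - a) (b - x)).
  apply Rabs_lt_between in Hy. apply HP. lra.
Qed.

Definition cont_on (f : R -> R) (a b : R) : Prop :=
  forall x, a <= x <= b -> forall eta, 0 < eta -> exists delta, 0 < delta /\
    forall y, a <= y <= b -> Rabs (y - x) < delta -> Rabs (f y - f x) < eta.

Notation cont_Ipi f := (cont_on f (- PI) PI).

Section ContinuityOnInterval.

Variables a b : R.

Lemma cont_on_clamp f : cont_on f a b <-> forall x, continuity_pt (fun z => f (clamp a b z)) x.
Proof.
  split.
  - intros Hf x. destruct (Rle_or_lt a b) as [Hab|Hba].
    + apply continuity_pt_locally. intros eps.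
      destruct (Hf (clamp a b x) (clamp_in a b x Hab) eps (cond_pos eps)) as [d [Hd H]].
      exists (mkposreal d Hd). intros y Hy. change (Rabs (y - x) < d) in Hy.
      apply H; [apply clamp_in; auto|]. pose proof (clamp_lip a b y x). lra.
    + apply (continuity_pt_ext (fun _ => f a)); [|apply continuity_pt_const; intros ? ?; auto].
      intros z. unfold clamp, Rmax, Rmin. repeat destruct Rle_dec; auto; lra.
  - intros H x Hx eta He.
    destruct (proj1 (continuity_pt_locally _ _) (H x) (mkposreal eta He)) as [d Hd].
    exists d. split; [apply cond_pos|]. intros y Hy Hyx.
    specialize (Hd y Hyx). simpl in Hd. rewrite !clamp_id in Hd; auto.
Qed.

Lemma continuous_cont_on f : (forall x, continuity_pt f x) -> cont_on f a b.
Proof.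
  intros H x _ eta He.
  destruct (proj1 (continuity_pt_locally _ _) (H x) (mkposreal eta He)) as [d Hd].
  exists d. split; [apply cond_pos|]. intros y _ Hyx. apply (Hd y Hyx).
Qed.

Lemma cont_on_comp f g :
  cont_on f a b -> (forall x, a <= x <= b -> continuity_pt g (f x)) -> cont_on (fun x => g (f x)) a b.
Proof.
  intros Hf Hg. destruct (Rle_or_lt a b) as [Hab|Hba].
  - apply cont_on_clamp. intros x.
    apply (continuity_pt_comp (fun z => f (clamp a b z)) g).
    + apply cont_on_clamp; auto.
    + apply Hg, clamp_in, Hab.
  - intros x Hx. lra.
Qed.

Lemma cont_on_const c : cont_on (fun _ => c) a b.
Proof. apply continuous_cont_on. intros; apply continuity_pt_const; intros ? ?; auto. Qed.

Lemma cont_on_plus f g : cont_on f a b -> cont_on g a b -> cont_on (fun x => f x + g x) a b.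
Proof.
  rewrite !cont_on_clamp. intros Hf Hg x.
  apply (continuity_pt_plus (fun z => f (clamp a b z)) (fun z => g (clamp a b z))); auto.
Qed.

Lemma cont_on_minus f g : cont_on f a b -> cont_on g a b -> cont_on (fun x => f x - g x) a b.
Proof.
  rewrite !cont_on_clamp. intros Hf Hg x.
  apply (continuity_pt_minus (fun z => f (clamp a b z)) (fun z => g (clamp a b z))); auto.
Qed.

Lemma cont_on_mult f g : cont_on f a b -> cont_on g a b -> cont_on (fun x => f x * g x) a b.
Proof.
  rewrite !cont_on_clamp. intros Hf Hg x.
  apply (continuity_pt_mult (fun z => f (clamp a b z)) (fun z => g (clamp a b z))); auto.
Qed.

Lemma cont_on_opp f : cont_on f a b -> cont_on (fun x => - f x) a b.
Proof.
  intros Hf. apply (cont_on_comp f Ropp Hf). intros; apply continuity_pt_opp, continuity_pt_id.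
Qed.

Lemma cont_on_pow2 f : cont_on f a b -> cont_on (fun x => f x ^ 2) a b.
Proof.
  intros Hf. apply (cont_on_comp f (fun z => z ^ 2) Hf). intros x _.
  apply derivable_continuous_pt, derivable_pt_pow.
Qed.

Lemma cont_on_argmax f : a <= b -> cont_on f a b ->
  exists xm, a <= xm <= b /\ forall x, a <= x <= b -> f x <= f xm.
Proof.
  rewrite cont_on_clamp. intros Hab Hf.
  destruct (continuity_ab_maj (fun z => f (clamp a b z)) a b) as [xm [H1 H2]];
    [lra | intros; apply Hf |].
  exists xm. split; [exact H2|]. intros x Hx.
  specialize (H1 x Hx). rewrite !clamp_id in H1; auto.
Qed.

Lemma cont_on_bounded f : a <= b -> cont_on f a b ->
  exists B, 0 <= B /\ forall x, a <= x <= b -> Rabs (f x) <= B.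
Proof.
  intros Hab Hf.
  destruct (cont_on_argmax (fun x => Rabs (f x))) as [xm [_ Hxm]]; auto.
  - apply (cont_on_comp f Rabs Hf). intros; apply Rcontinuity_abs.
  - exists (Rabs (f xm)). split; [apply Rabs_pos | exact Hxm].
Qed.

Lemma cont_on_ex_RInt f lo hi :
  cont_on f a b -> a <= lo <= b -> a <= hi <= b -> ex_RInt f lo hi.
Proof.
  intros Hf Hl Hh.
  apply ex_RInt_ext with (fun z => f (clamp a b z)).
  - intros x Hx. rewrite clamp_id; auto. unfold Rmin, Rmax in Hx; destruct Rle_dec; lra.
  - apply (ex_RInt_continuous (V := R_CompleteNormedModule)). intros z _.
    apply continuity_pt_filterlim. apply cont_on_clamp; auto.
Qed.

Lemma primitive_clamp_derive f x : cont_on f a b ->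
  is_derive (fun y => RInt (fun z => f (clamp a b z)) a y) x (f (clamp a b x)).
Proof.
  intros Hf. rewrite cont_on_clamp in Hf.
  apply (is_derive_RInt (V := R_NormedModule) (fun z => f (clamp a b z)) _ a);
    [|apply continuity_pt_filterlim, Hf].
  exists (mkposreal 1 Rlt_0_1). intros y _.
  apply (RInt_correct (V := R_CompleteNormedModule)).
  apply (ex_RInt_continuous (V := R_CompleteNormedModule)).
  intros z _. apply continuity_pt_filterlim, Hf.
Qed.

Lemma primitive_eq_clamp (f : R -> R) x : a <= x <= b ->
  RInt f a x = RInt (fun z => f (clamp a b z)) a x.
Proof.
  intros Hx. apply RInt_ext. rewrite Rmin_left, Rmax_right by lra. intros z Hz.
  rewrite clamp_id; auto. lra.
Qed.

Lemma primitive_cont_on f : cont_on f a b -> cont_on (fun x => RInt f a x) a b.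
Proof.
  intros Hf x Hx eta He.
  assert (Hc : continuity_pt (fun y => RInt (fun z => f (clamp a b z)) a y) x).
  { apply continuity_pt_filterlim, (ex_derive_continuous (K := R_AbsRing) (V := R_NormedModule)).
    eexists. apply primitive_clamp_derive; auto. }
  destruct (proj1 (continuity_pt_locally _ _) Hc (mkposreal eta He)) as [d Hd].
  exists d. split; [apply cond_pos|]. intros y Hy Hyx.
  rewrite !(primitive_eq_clamp f) by auto. apply (Hd y Hyx).
Qed.

Lemma primitive_derive_interior f x : cont_on f a b -> a < x < b ->
  is_derive (fun y => RInt f a y) x (f x).
Proof.
  intros Hf Hx. apply (is_derive_ext_loc (fun y => RInt (fun z => f (clamp a b z)) a y)).
  - apply (locally_interior _ a b x Hx). intros y Hy.
    symmetry. apply primitive_eq_clamp. lra.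
  - rewrite <- (clamp_id a b x) at 2 by lra. apply primitive_clamp_derive; auto.
Qed.

Lemma RInt_derive_interior F f : a <= b -> cont_on F a b -> cont_on f a b ->
  (forall x, a < x < b -> is_derive F x (f x)) -> RInt f a b = F b - F a.
Proof.
  intros Hab HF Hf HD.
  set (G := fun y => RInt (fun z => f (clamp a b z)) a y).
  destruct (MVT_gen (fun x => F (clamp a b x) - G x) a b (fun _ => 0)) as [c [_ Hc]].
  - rewrite Rmin_left, Rmax_right by lra. intros x Hx.
    replace 0 with (f x - f (clamp a b x)) by (rewrite clamp_id; [ring | lra]).
    apply (is_derive_minus (K := R_AbsRing) (V := R_NormedModule));
      [|apply primitive_clamp_derive; auto].
    apply (is_derive_ext_loc F); [|apply HD; lra].
    apply (locally_interior _ a b x Hx). intros y Hy. rewrite clamp_id; auto. lra.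
  - intros x _. apply continuity_pt_minus; [apply cont_on_clamp; auto|].
    apply continuity_pt_filterlim, (ex_derive_continuous (K := R_AbsRing) (V := R_NormedModule)).
    eexists; apply primitive_clamp_derive; auto.
  - rewrite !clamp_id in Hc by lra. unfold G in Hc.
    rewrite (RInt_point (V := R_CompleteNormedModule)) in Hc.
    rewrite (primitive_eq_clamp f) by lra. change (zero : R) with 0 in Hc. lra.
Qed.

Lemma RInt_on_bound f B x : cont_on f a b -> a <= x <= b ->
  (forall y, a <= y <= b -> Rabs (f y) <= B) -> Rabs (RInt f a x) <= (b - a) * B.
Proof.
  intros Hf Hx HB.
  assert (0 <= B) by (specialize (HB x Hx); pose proof (Rabs_pos (f x)); lra).
  eapply Rle_trans.
  - apply abs_RInt_le_const; [lra | apply (cont_on_ex_RInt f); auto; lra |].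
    intros t Ht. apply HB. lra.
  - nra.
Qed.

Section TwoFunctions.

Variables f g : R -> R.
Hypotheses (Hf : cont_on f a b) (Hg : cont_on g a b) (Hab : a <= b).

Let ex_RInt_f : ex_RInt f a b.
Proof. apply (cont_on_ex_RInt f); auto; lra. Qed.

Let ex_RInt_g : ex_RInt g a b.
Proof. apply (cont_on_ex_RInt g); auto; lra. Qed.

Lemma RInt_on_plus : RInt (fun x => f x + g x) a b = RInt f a b + RInt g a b.
Proof. apply (RInt_plus (V := R_CompleteNormedModule)); auto. Qed.

Lemma RInt_on_minus : RInt (fun x => f x - g x) a b = RInt f a b - RInt g a b.
Proof. apply (RInt_minus (V := R_CompleteNormedModule)); auto. Qed.

Lemma RInt_on_opp : RInt (fun x => - f x) a b = - RInt f a b.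
Proof. apply (RInt_opp (V := R_CompleteNormedModule)); auto. Qed.

Lemma RInt_on_scal c : RInt (fun x => c * f x) a b = c * RInt f a b.
Proof. apply (RInt_scal (V := R_CompleteNormedModule)); auto. Qed.

Lemma RInt_on_le : (forall x, a <= x <= b -> f x <= g x) -> RInt f a b <= RInt g a b.
Proof. intros H. apply RInt_le; auto. intros x Hx. apply H. lra. Qed.

Lemma RInt_on_dist e x : a <= x <= b -> (forall y, a <= y <= b -> Rabs (f y - g y) <= e) ->
  Rabs (RInt f a x - RInt g a x) <= (b - a) * e.
Proof.
  intros Hx He.
  rewrite <- (RInt_minus (V := R_CompleteNormedModule));
    [| apply (cont_on_ex_RInt f) | apply (cont_on_ex_RInt g)]; auto; try lra.
  apply RInt_on_bound; auto using cont_on_minus.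
Qed.

End TwoFunctions.

End ContinuityOnInterval.

Lemma RInt_on_ext (f g : R -> R) a b :
  a <= b -> (forall x, a <= x <= b -> f x = g x) -> RInt f a b = RInt g a b.
Proof. intros Hab H. apply RInt_ext. rewrite Rmin_left, Rmax_right by lra. intros; apply H; lra. Qed.

Lemma RInt_on_const (c a b : R) : RInt (fun _ => c) a b = (b - a) * c.
Proof. apply (RInt_const (V := R_CompleteNormedModule)). Qed.

Lemma RInt_on_nonneg f a b : a <= b -> cont_on f a b -> (forall x, a <= x <= b -> 0 <= f x) ->
  0 <= RInt f a b.
Proof.
  intros Hab Hf H. rewrite <- (Rmult_0_r (b - a)), <- (RInt_on_const 0 a b).
  apply RInt_on_le; auto using cont_on_const.
Qed.

Lemma RInt_on_Chasles3 (f : R -> R) a b c d : a <= b <= c -> c <= d -> cont_on f a d ->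
  RInt f a d = RInt f a b + RInt f b c + RInt f c d.
Proof.
  intros Hbc Hcd Hf.
  rewrite <- (RInt_Chasles f a b d), <- (RInt_Chasles f b c d)
    by (apply (cont_on_ex_RInt a d); auto; lra).
  change (RInt f a b + (RInt f b c + RInt f c d) = RInt f a b + RInt f b c + RInt f c d). ring.
Qed.

Lemma RInt_on_sub_le f a b c d : a <= c <= d -> d <= b -> cont_on f a b ->
  (forall x, a <= x <= b -> 0 <= f x) -> RInt f c d <= RInt f a b.
Proof.
  intros Hcd Hdb Hf H.
  assert (Hsub : forall lo hi, a <= lo <= hi -> hi <= b -> cont_on f lo hi).
  { intros lo hi Hl Hh x Hx eta He. destruct (Hf x ltac:(lra) eta He) as [dl [Hdl Hy]].
    exists dl. split; auto. intros y Hy' Hyx. apply Hy; auto; lra. }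
  rewrite (RInt_on_Chasles3 f a c d b) by (auto; lra).
  assert (0 <= RInt f a c) by (apply RInt_on_nonneg; [lra | apply Hsub; lra | intros; apply H; lra]).
  assert (0 <= RInt f d b) by (apply RInt_on_nonneg; [lra | apply Hsub; lra | intros; apply H; lra]).
  lra.
Qed.

Lemma RInt_of_derive F f lo hi : (forall x, is_derive F x (f x)) ->
  (forall x, continuity_pt f x) -> RInt f lo hi = F hi - F lo.
Proof.
  intros HD Hc. apply is_RInt_unique.
  apply (is_RInt_derive (V := R_CompleteNormedModule)); intros; [apply HD|].
  apply continuity_pt_filterlim, Hc.
Qed.

Lemma deriv_on_Ipi_interior F g x : deriv_on_Ipi F g -> - PI < x < PI -> is_derive F x (g x).
Proof.
  intros HF Hx. apply is_derive_Reals. intros eps He.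
  destruct (HF x ltac:(unfold Ipi; lra) (eps / 2) ltac:(lra)) as [d [Hd H]].
  assert (Hm : 0 < Rmin d (Rmin (x + PI) (PI - x))) by (repeat apply Rmin_pos; lra).
  exists (mkposreal _ Hm). intros h Hh Hhd. simpl in Hhd.
  pose proof (Rmin_l d (Rmin (x + PI) (PI - x))). pose proof (Rmin_r d (Rmin (x + PI) (PI - x))).
  pose proof (Rmin_l (x + PI) (PI - x)). pose proof (Rmin_r (x + PI) (PI - x)).
  apply Rabs_lt_between in Hhd as Hb.
  specialize (H (x + h) ltac:(unfold Ipi; lra)).
  replace (x + h - x) with h in H by ring.
  assert (0 < Rabs h) by (apply Rabs_pos_lt; auto).
  specialize (H ltac:(lra)). lra.
Qed.

Lemma deriv_on_Ipi_of_derivable F g :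
  (forall x, derivable_pt_lim F x (g x)) -> deriv_on_Ipi F g.
Proof.
  intros HD x _ eta He. destruct (HD x eta He) as [d Hd].
  exists d. split; [apply cond_pos|]. intros y _ [Hy1 Hy2].
  assert (y - x <> 0) by (intros E; rewrite E, Rabs_R0 in Hy1; lra).
  specialize (Hd (y - x) H Hy2). replace (x + (y - x)) with y in Hd by ring. lra.
Qed.

Lemma deriv_on_Ipi_argmax F g x :
  deriv_on_Ipi F g -> - PI < x < PI -> (forall y, Ipi y -> F y <= F x) -> g x = 0.
Proof.
  intros HF Hx Hmax.
  assert (HD := proj1 (is_derive_Reals _ _ _) (deriv_on_Ipi_interior F g x HF Hx)).
  rewrite <- (derive_pt_eq_0 F x (g x) (exist _ (g x) HD) HD).
  apply (deriv_maximum F (- PI) PI); try lra.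
  intros y Hy1 Hy2. apply Hmax. unfold Ipi; lra.
Qed.

Lemma real_induction (P : R -> Prop) a b : a <= b ->
  (forall m, a <= m <= b -> (forall r, a <= r < m -> P r) -> P m) ->
  (forall m, a <= m < b -> P m -> exists d, 0 < d /\ forall r, m < r < m + d -> r <= b -> P r) ->
  P b.
Proof.
  intros Hab Hlim Hstep.
  set (E := fun s => a <= s <= b /\ forall r, a <= r <= s -> P r).
  assert (Ea : E a).
  { split; [lra|]. intros r Hr. replace r with a by lra. apply Hlim; [lra|]. intros; lra. }
  destruct (completeness E ltac:(exists b; intros s [Hs _]; lra) (ex_intro _ a Ea)) as [m [Hm1 Hm2]].
  assert (Ham : a <= m) by (apply Hm1, Ea).
  assert (Hmb : m <= b) by (apply Hm2; intros s [Hs _]; lra).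
  assert (Hbelow : forall r, a <= r < m -> P r).
  { intros r Hr. apply NNPP. intros HPr.
    assert (m <= r); [|lra].
    apply Hm2. intros s [Hs Hs']. apply Rnot_lt_le. intros Hrs. apply HPr, Hs'. lra. }
  assert (HPm : P m) by (apply Hlim; auto).
  destruct (Rle_lt_or_eq_dec m b Hmb) as [Hlt| ->]; auto.
  destruct (Hstep m ltac:(lra) HPm) as [d [Hd HPd]].
  set (s := m + Rmin d (b - m) / 2).
  assert (0 < Rmin d (b - m)) by (apply Rmin_pos; lra).
  pose proof (Rmin_l d (b - m)). pose proof (Rmin_r d (b - m)).
  assert (Es : E s).
  { split; [unfold s; lra|]. intros r Hr.
    destruct (Rlt_le_dec r m) as [Hrm|Hrm]; [apply Hbelow; lra|].
    destruct (Rle_lt_or_eq_dec m r Hrm) as [Hrm'| <-]; auto.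
    apply HPd; unfold s in *; lra. }
  assert (s <= m) by (apply Hm1, Es). unfold s in *. lra.
Qed.

Definition dini_ge (f : R -> R) (t D : R) : Prop :=
  forall eps, 0 < eps -> exists h0, 0 < h0 /\
    forall h, 0 < h < h0 -> f (t + h) - f t >= h * (D - eps).

Lemma dini_ge_le f t D D' : D' <= D -> dini_ge f t D -> dini_ge f t D'.
Proof.
  intros HD Hf eps He. destruct (Hf eps He) as [h0 [Hh0 H]].
  exists h0. split; auto. intros h Hh. specialize (H h Hh). nra.
Qed.

Lemma dini_nondecreasing f a b : a <= b -> cont_on f a b ->
  (forall t, a < t < b -> dini_ge f t 0) -> f a <= f b.
Proof.
  intros Hab Hc Hd.
  assert (Happrox : forall e, 0 < e -> f a - e * (b - a) - e <= f b).
  { intros e He.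
    apply (real_induction (fun r => f a - e * (r - a) - e <= f r) a b Hab).
    - intros m Hm Hbelow. apply Rnot_lt_le. intros Hgap.
      destruct (Rle_lt_or_eq_dec a m (proj1 Hm)) as [Ham| <-]; [|lra].
      destruct (Hc m Hm (f a - e * (m - a) - e - f m) ltac:(lra)) as [d [Hd0 Hd1]].
      set (r := Rmax a (m - d / 2)).
      assert (a <= r) by apply Rmax_l. assert (m - d / 2 <= r) by apply Rmax_r.
      assert (r < m) by (unfold r, Rmax; destruct Rle_dec; lra).
      specialize (Hbelow r ltac:(lra)).
      specialize (Hd1 r ltac:(lra) ltac:(rewrite Rabs_left; lra)).
      apply Rabs_lt_between in Hd1. nra.
    - intros m Hm HPm. destruct (Rle_lt_or_eq_dec a m (proj1 Hm)) as [Ham| <-].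
      + destruct (Hd m ltac:(lra) e He) as [h0 [Hh0 Hh]].
        exists h0. split; auto. intros r Hr Hrb.
        specialize (Hh (r - m) ltac:(lra)). replace (m + (r - m)) with r in Hh by ring. nra.
      + destruct (Hc a ltac:(lra) e He) as [d [Hd0 Hd1]].
        exists d. split; auto. intros r Hr Hrb.
        specialize (Hd1 r ltac:(lra) ltac:(rewrite Rabs_right; lra)).
        apply Rabs_lt_between in Hd1. nra. }
  apply Rnot_lt_le. intros Hlt.
  set (e := (f a - f b) / (2 * (b - a + 1))).
  assert (He : 0 < e) by (apply Rdiv_lt_0_compat; lra).
  specialize (Happrox e He).
  assert (e * (2 * (b - a + 1)) = f a - f b) by (unfold e; field; lra).
  nra.
Qed.

Lemma derivable_right_increment g t dg z : derivable_pt_lim g t dg -> 0 < z ->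
  exists d, 0 < d /\ forall h, 0 < h < d ->
    Rabs (g (t + h) - g t - dg * h) <= z * h /\ Rabs (g (t + h) - g t) <= z.
Proof.
  intros Hg Hz.
  destruct (Hg z Hz) as [d1 Hd1].
  destruct (proj1 (continuity_pt_locally _ _) (derivable_continuous_pt g t (exist _ dg Hg))
              (mkposreal z Hz)) as [d2 Hd2].
  exists (Rmin d1 d2). split; [apply Rmin_pos; apply cond_pos|]. intros h Hh.
  pose proof (Rmin_l d1 d2). pose proof (Rmin_r d1 d2).
  specialize (Hd1 h ltac:(lra) ltac:(rewrite Rabs_right; lra)).
  specialize (Hd2 (t + h) ltac:(change (Rabs (t + h - t) < d2); rewrite Rabs_right; lra)).
  split; [|left; exact Hd2].
  replace (g (t + h) - g t - dg * h) with (h * ((g (t + h) - g t) / h - dg)) by (field; lra).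
  rewrite Rabs_mult, Rabs_right by lra. nra.
Qed.

Lemma dini_ge_mult f g t D dg : (forall s, 0 < g s) -> derivable_pt_lim g t dg ->
  dini_ge f t D -> dini_ge (fun s => f s * g s) t (D * g t + f t * dg).
Proof.
  intros Hpos Hg Hf eps He.
  set (E0 := g t). assert (HE0 : 0 < E0) by apply Hpos.
  set (e1 := Rmin 1 (eps / (2 * (E0 + 1)))).
  assert (He1 : 0 < e1) by (apply Rmin_pos; [lra | apply Rdiv_lt_0_compat; lra]).
  assert (He1a : e1 <= 1) by apply Rmin_l.
  assert (He1b : e1 <= eps / (2 * (E0 + 1))) by apply Rmin_r.
  set (z := eps / (2 * (Rabs D + Rabs (f t) + 1))).
  pose proof (Rabs_pos D). pose proof (Rabs_pos (f t)).
  assert (Hz : 0 < z) by (apply Rdiv_lt_0_compat; lra).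
  destruct (Hf e1 He1) as [h0 [Hh0 Hfh]].
  destruct (derivable_right_increment g t dg z Hg Hz) as [d [Hd Hgh]].
  exists (Rmin h0 d). split; [apply Rmin_pos; auto|]. intros h Hh.
  pose proof (Rmin_l h0 d). pose proof (Rmin_r h0 d).
  specialize (Hfh h ltac:(lra)). destruct (Hgh h ltac:(lra)) as [Hlin Hcont].
  fold E0 in Hlin, Hcont. set (E1 := g (t + h)) in *.
  assert (HE1 : 0 < E1) by apply Hpos.
  apply Rabs_le_between in Hlin. apply Rabs_le_between in Hcont.
  assert (Hfirst : (f (t + h) - f t) * E1 >= h * (D - e1) * E1)
    by (apply Rle_ge, Rmult_le_compat_r; lra).
  assert (Hmix : Rabs (h * (D - e1) * (E1 - E0)) <= h * (Rabs D + 1) * z).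
  { rewrite !Rabs_mult, (Rabs_right h) by lra.
    assert (Rabs (D - e1) <= Rabs D + 1) by (eapply Rle_trans; [apply Rabs_triang|];
      rewrite Rabs_Ropp, (Rabs_right e1); lra).
    apply Rmult_le_compat; try apply Rmult_le_pos; try apply Rabs_pos; try lra.
    apply Rmult_le_compat_l; lra. apply Rabs_le_between; lra. }
  assert (Hlast : Rabs (f t * (E1 - E0 - dg * h)) <= Rabs (f t) * (z * h)).
  { rewrite Rabs_mult. apply Rmult_le_compat_l; [apply Rabs_pos|]. apply Rabs_le_between; lra. }
  apply Rabs_le_between in Hmix. apply Rabs_le_between in Hlast.
  assert (e1 * E0 <= eps / 2).
  { apply Rle_trans with (eps / (2 * (E0 + 1)) * (E0 + 1)); [nra | right; field; lra]. }
  assert ((Rabs D + 1 + Rabs (f t)) * z = eps / 2)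
    by (unfold z; field; lra).
  replace (f (t + h) * E1 - f t * E0) with
    ((f (t + h) - f t) * E1 + f t * (E1 - E0 - dg * h) + f t * dg * h) by ring.
  replace (h * (D - e1) * E1) with (h * (D - e1) * E0 + h * (D - e1) * (E1 - E0)) in Hfirst by ring.
  nra.
Qed.

Lemma dini_gronwall f a b lam D : a <= b -> lam <> 0 -> cont_on f a b ->
  (forall t, a < t < b -> dini_ge f t (lam * f t + D)) ->
  (f a + D / lam) * exp (- lam * a) <= (f b + D / lam) * exp (- lam * b).
Proof.
  intros Hab Hlam Hc Hd.
  apply (dini_nondecreasing (fun t => (f t + D / lam) * exp (- lam * t)) a b Hab).
  - apply cont_on_mult; [apply cont_on_plus; auto using cont_on_const|].
    apply continuous_cont_on. intros s. apply derivable_continuous_pt.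
    apply ex_derive_Reals_0. auto_derive. auto.
  - intros t Ht.
    replace 0 with (lam * (f t + D / lam) * exp (- lam * t)
                    + (f t + D / lam) * (- lam * exp (- lam * t))) by ring.
    apply (dini_ge_mult (fun s => f s + D / lam) (fun s => exp (- lam * s))).
    + intros; apply exp_pos.
    + apply is_derive_Reals. auto_derive; auto. ring.
    + intros eps He. destruct (Hd t Ht eps He) as [h0 [Hh0 H]].
      exists h0. split; auto. intros h Hh. specialize (H h Hh).
      replace (lam * (f t + D / lam)) with (lam * f t + D) by (field; auto). lra.
Qed.

Lemma cont_on_domain_slice f t : cont_on_domain f -> 0 <= t -> cont_Ipi (f t).
Proof.
  intros Hf Ht x Hx eta He. destruct (Hf t x Ht Hx eta He) as [d [Hd H]].
  exists d. split; auto. intros y Hy Hyx. apply H; auto.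
  unfold Rminus; rewrite Rplus_opp_r, Rabs_R0. lra.
Qed.

(* Compactness of [-pi, pi], through a Lebesgue number of the cover by the
   neighbourhoods given by joint continuity. *)
Lemma cont_on_domain_time_unif f t eta : cont_on_domain f -> 0 <= t -> 0 < eta ->
  exists delta, 0 < delta /\ forall s x, 0 <= s -> Ipi x -> Rabs (s - t) < delta ->
    Rabs (f s x - f t x) < eta.
Proof.
  intros Hf Ht He.
  assert (G : forall z, exists dz : posreal, Ipi z -> forall s y, 0 <= s -> Ipi y ->
     Rabs (s - t) < dz -> Rabs (y - z) < dz -> Rabs (f s y - f t z) < eta / 2).
  { intros z. destruct (classic (Ipi z)) as [Hz|Hz].
    - destruct (Hf t z Ht Hz (eta / 2) ltac:(lra)) as [dz [Hdz H]].
      exists (mkposreal dz Hdz). intros _. exact H.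
    - exists (mkposreal 1 Rlt_0_1). intros; contradiction. }
  pose (dz := fun z => proj1_sig (constructive_indefinite_description _ (G z))).
  assert (Hdz : forall z, Ipi z -> forall s y, 0 <= s -> Ipi y ->
     Rabs (s - t) < dz z -> Rabs (y - z) < dz z -> Rabs (f s y - f t z) < eta / 2)
    by (intros z; exact (proj2_sig (constructive_indefinite_description _ (G z)))).
  destruct (compactness_value_1d (- PI) PI dz) as [d Hd].
  exists d. split; [apply cond_pos|]. intros s x Hs Hx Hst.
  specialize (Hd x Hx). apply NNPP in Hd. destruct Hd as [z [Hz [Hxz Hdz']]].
  assert (A1 : Rabs (f s x - f t z) < eta / 2) by (apply Hdz; auto; lra).
  assert (A2 : Rabs (f t x - f t z) < eta / 2).
  { apply Hdz; auto. unfold Rminus; rewrite Rplus_opp_r, Rabs_R0. apply cond_pos. }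
  replace (f s x - f t x) with ((f s x - f t z) - (f t x - f t z)) by ring.
  eapply Rle_lt_trans; [apply Rabs_triang|]. rewrite Rabs_Ropp. lra.
Qed.

Lemma cont_on_domain_bounded f T : cont_on_domain f -> 0 <= T ->
  exists K, 0 <= K /\ forall s x, 0 <= s <= T -> Ipi x -> Rabs (f s x) <= K.
Proof.
  intros Hf HT.
  assert (Hloc : forall m, 0 <= m -> exists B d, 0 <= B /\ 0 < d /\
             forall s x, 0 <= s -> Rabs (s - m) < d -> Ipi x -> Rabs (f s x) <= B).
  { intros m Hm.
    destruct (cont_on_bounded (- PI) PI (f m)) as [B [HB HBm]];
      [pose proof PI_gt_3; lra | apply cont_on_domain_slice; auto |].
    destruct (cont_on_domain_time_unif f m 1 Hf Hm Rlt_0_1) as [d [Hd H]].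
    exists (B + 1), d. split; [lra|]. split; auto. intros s x Hs Hsm Hx.
    specialize (H s x Hs Hx Hsm). specialize (HBm x Hx).
    replace (f s x) with ((f s x - f m x) + f m x) by ring.
    eapply Rle_trans; [apply Rabs_triang | lra]. }
  apply (real_induction (fun r => exists K, 0 <= K /\
           forall s x, 0 <= s <= r -> Ipi x -> Rabs (f s x) <= K) 0 T HT).
  - intros m Hm Hbelow. destruct (Hloc m (proj1 Hm)) as [B [d [HB [Hd Hl]]]].
    destruct (Rle_lt_or_eq_dec 0 m (proj1 Hm)) as [Hm0| <-].
    + set (r := Rmax 0 (m - d / 2)).
      assert (0 <= r) by apply Rmax_l. assert (m - d / 2 <= r) by apply Rmax_r.
      assert (r < m) by (unfold r, Rmax; destruct Rle_dec; lra).
      destruct (Hbelow r ltac:(lra)) as [K1 [HK1 HK1b]].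
      exists (Rmax K1 B). split; [eapply Rle_trans; [exact HK1 | apply Rmax_l]|].
      intros s x Hs Hx. destruct (Rle_dec s r).
      * eapply Rle_trans; [apply HK1b; auto; lra | apply Rmax_l].
      * eapply Rle_trans; [apply Hl; auto; [lra | apply Rabs_lt_between; lra] | apply Rmax_r].
    + exists B. split; auto. intros s x Hs Hx. apply Hl; auto; [lra|].
      replace s with 0 by lra. rewrite Rminus_0_r, Rabs_R0. auto.
  - intros m Hm [K1 [HK1 HK1b]]. destruct (Hloc m (proj1 Hm)) as [B [d [HB [Hd Hl]]]].
    exists d. split; auto. intros r Hr Hrb.
    exists (Rmax K1 B). split; [eapply Rle_trans; [exact HK1 | apply Rmax_l]|].
    intros s x Hs Hx. destruct (Rle_dec s m).
    + eapply Rle_trans; [apply HK1b; auto; lra | apply Rmax_l].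
    + eapply Rle_trans; [apply Hl; auto; [lra | apply Rabs_lt_between; lra] | apply Rmax_r].
Qed.

Lemma cont_on_domain_argmax f : cont_on_domain f -> exists xm : R -> R,
  forall t, 0 <= t -> Ipi (xm t) /\ forall x, Ipi x -> f t x <= f t (xm t).
Proof.
  intros Hf.
  assert (G : forall t, exists m, 0 <= t -> Ipi m /\ forall x, Ipi x -> f t x <= f t m).
  { intros t. destruct (Rle_dec 0 t) as [Ht|Ht].
    - destruct (cont_on_argmax (- PI) PI (f t)) as [m Hm];
        [pose proof PI_gt_3; lra | apply cont_on_domain_slice; auto |].
      exists m. intros _. exact Hm.
    - exists 0. intros; contradiction. }
  exists (fun t => proj1_sig (constructive_indefinite_description _ (G t))).
  intros t. exact (proj2_sig (constructive_indefinite_description _ (G t))).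
Qed.

Definition inv_root4 (w : R) : R := Rpower w (- (1 / 4)).

Definition d_inv_root4 (w : R) : R := - inv_root4 w / (4 * w).

Lemma inv_root4_pos w : 0 < inv_root4 w.
Proof. apply exp_pos. Qed.

Lemma inv_root4_inv_pow4 Z : 0 < Z -> inv_root4 (/ Z ^ 4) = Z.
Proof.
  intros HZ. unfold inv_root4, Rpower. rewrite ln_Rinv, ln_pow by (try apply pow_lt; auto).
  replace (- (1 / 4) * - (INR 4 * ln Z)) with (ln Z) by (simpl; field).
  apply exp_ln; auto.
Qed.

Lemma inv_root4_derive w : 0 < w -> is_derive inv_root4 w (d_inv_root4 w).
Proof. intros Hw. unfold d_inv_root4, inv_root4, Rpower. auto_derive; auto. field. lra. Qed.

Lemma inv_root4_cont w : 0 < w -> continuity_pt inv_root4 w.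
Proof.
  intros Hw. apply derivable_continuous_pt, ex_derive_Reals_0.
  eexists. apply inv_root4_derive, Hw.
Qed.

Lemma d_inv_root4_cont w : 0 < w -> continuity_pt d_inv_root4 w.
Proof.
  intros Hw. apply derivable_continuous_pt, ex_derive_Reals_0.
  unfold d_inv_root4, inv_root4, Rpower. auto_derive. lra.
Qed.

Lemma inv_root4_decr w1 w2 : 0 < w1 -> w1 <= w2 -> inv_root4 w2 <= inv_root4 w1.
Proof.
  intros H1 H2. unfold inv_root4, Rpower.
  destruct (Req_dec w1 w2) as [-> | Hne]; [lra|].
  left. apply exp_increasing. pose proof (ln_increasing w1 w2 H1 ltac:(lra)). lra.
Qed.

(* Convexity, through [exp x >= 1 + x] and [ln y <= y - 1]. *)
Lemma inv_root4_tangent w1 w2 : 0 < w1 -> 0 < w2 ->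
  inv_root4 w2 - inv_root4 w1 >= d_inv_root4 w1 * (w2 - w1).
Proof.
  intros H1 H2. unfold d_inv_root4, inv_root4, Rpower.
  replace (exp (- (1 / 4) * ln w2))
    with (exp (- (1 / 4) * ln w1) * exp (- (1 / 4) * (ln w2 - ln w1)))
    by (rewrite <- exp_plus; f_equal; ring).
  assert (Hl : ln w2 - ln w1 <= (w2 - w1) / w1).
  { rewrite <- ln_div by auto. pose proof (exp_ineq1_le (ln (w2 / w1))).
    rewrite exp_ln in H by (apply Rdiv_lt_0_compat; auto).
    replace ((w2 - w1) / w1) with (w2 / w1 - 1) by (field; lra). lra. }
  pose proof (exp_ineq1_le (- (1 / 4) * (ln w2 - ln w1))).
  pose proof (exp_pos (- (1 / 4) * ln w1)).
  set (G1 := exp (- (1 / 4) * ln w1)) in *.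
  replace (- G1 / (4 * w1) * (w2 - w1)) with (G1 * (- (1 / 4) * ((w2 - w1) / w1))) by (field; lra).
  nra.
Qed.

Lemma d_inv_root4_bound th w : 0 < th -> th <= w ->
  - (inv_root4 th / (4 * th)) <= d_inv_root4 w <= 0.
Proof.
  intros Ht Hw. unfold d_inv_root4.
  pose proof (inv_root4_decr th w Ht Hw). pose proof (inv_root4_pos w).
  assert (inv_root4 w / (4 * w) <= inv_root4 th / (4 * th)).
  { unfold Rdiv. apply Rmult_le_compat; try lra.
    - left; apply Rinv_0_lt_compat; lra.
    - apply Rinv_le_contravar; lra. }
  assert (0 < inv_root4 w / (4 * w)) by (apply Rdiv_lt_0_compat; lra).
  unfold Rdiv in *. lra.
Qed.

Lemma inv_root4_lip th w1 w2 : 0 < th -> th <= w1 -> th <= w2 ->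
  Rabs (inv_root4 w2 - inv_root4 w1) <= inv_root4 th / (4 * th) * Rabs (w2 - w1).
Proof.
  intros Ht H1 H2.
  pose proof (inv_root4_tangent w1 w2 ltac:(lra) ltac:(lra)).
  pose proof (inv_root4_tangent w2 w1 ltac:(lra) ltac:(lra)).
  pose proof (d_inv_root4_bound th w1 Ht H1). pose proof (d_inv_root4_bound th w2 Ht H2).
  apply Rabs_le_between. split_Rabs; nra.
Qed.

(* Lower bound for the time derivative of [(M + th - a)^(-1/4)], after the
   transport term is integrated by parts, at a point where [a = A] and [max a = M]. *)
Definition lyap_rate (M A th : R) : R :=
  d_inv_root4 (M + th - A) * (M ^ 2 - A ^ 2) + A * inv_root4 (M + th - A).

Lemma lyap_rate_cont M th A : 0 < M + th - A -> continuity_pt (fun A => lyap_rate M A th) A.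
Proof.
  intros H. apply derivable_continuous_pt, ex_derive_Reals_0.
  unfold lyap_rate, d_inv_root4, inv_root4, Rpower. auto_derive. repeat split; lra.
Qed.

Lemma lyap_rate_factor M A th : 0 < M + th - A ->
  lyap_rate M A th = inv_root4 (M + th - A) * (A - (M - A) / (M + th - A) * (M + A) / 4).
Proof. intros H. unfold lyap_rate, d_inv_root4. field. lra. Qed.

Lemma gap_ratio_bounds M A th : 0 < th -> A <= M -> 0 <= (M - A) / (M + th - A) <= 1.
Proof.
  intros Ht HAM. split; [apply Rmult_le_pos; [lra | left; apply Rinv_0_lt_compat; lra]|].
  apply Rmult_le_reg_r with (M + th - A); [lra|].
  unfold Rdiv; rewrite Rmult_assoc, Rinv_l; lra.
Qed.

Lemma lyap_rate_ge M A th K : 0 < th -> A <= M -> Rabs A <= K -> Rabs M <= K ->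
  lyap_rate M A th >= - (3 * K + 1) * inv_root4 (M + th - A).
Proof.
  intros Ht HAM HA HM. rewrite lyap_rate_factor by lra.
  pose proof (inv_root4_pos (M + th - A)). pose proof (gap_ratio_bounds M A th Ht HAM).
  set (q := (M - A) / (M + th - A)) in *.
  apply Rabs_le_between in HA. apply Rabs_le_between in HM.
  assert (q * (M + A) <= 2 * K) by nra.
  assert (A - q * (M + A) / 4 >= - (3 * K + 1)) by lra.
  nra.
Qed.

Definition late_loss (L : R) : R := (L / 4 + 3 * (L + L / 8) + 1) * inv_root4 (L / 8).
Definition late_shift (L : R) : R := 2 * PI * late_loss L / (L / 4).

Lemma late_shift_nonneg L : 0 < L -> 0 <= late_shift L.
Proof.
  intros HL. pose proof PI_gt_3. pose proof (inv_root4_pos (L / 8)). unfold late_shift, late_loss.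
  apply Rmult_le_pos; [| left; apply Rinv_0_lt_compat; lra].
  apply Rmult_le_pos; [lra | apply Rmult_le_pos; lra].
Qed.

(* [L = |mu|]: the regime where [a] is uniformly [L / 8]-close to [mu cos]. *)
Lemma lyap_rate_ge_late M A th L : 0 < th -> 0 < L -> A <= M -> L - L / 8 <= M <= L + L / 8 ->
  Rabs A <= L + L / 8 ->
  lyap_rate M A th >= L / 4 * inv_root4 (M + th - A) - late_loss L.
Proof.
  intros Ht HL HAM HM HA.
  pose proof (inv_root4_pos (L / 8)). pose proof (inv_root4_pos (M + th - A)).
  destruct (Rle_dec (3 * L / 4) A) as [Hbig|Hsmall].
  - rewrite lyap_rate_factor by lra. pose proof (gap_ratio_bounds M A th Ht HAM).
    assert (0 <= late_loss L) by (apply Rmult_le_pos; lra).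
    set (q := (M - A) / (M + th - A)) in *.
    assert (q * (M + A) <= M + A) by nra.
    assert (A - q * (M + A) / 4 >= L / 4) by lra.
    nra.
  - pose proof (lyap_rate_ge M A th (L + L / 8) Ht HAM HA ltac:(rewrite Rabs_right; lra)).
    pose proof (inv_root4_decr (L / 8) (M + th - A) ltac:(lra) ltac:(lra)).
    unfold late_loss. nra.
Qed.

Lemma sq_diff_bound u v K e : Rabs u <= K -> Rabs v <= K -> Rabs (u - v) <= e ->
  Rabs (u ^ 2 - v ^ 2) <= 2 * K * e.
Proof.
  intros Hu Hv He. replace (u ^ 2 - v ^ 2) with ((u - v) * (u + v)) by ring.
  rewrite Rabs_mult. pose proof (Rabs_triang u v). pose proof (Rabs_pos (u - v)).
  apply Rle_trans with (e * (2 * K)); [apply Rmult_le_compat; auto; [apply Rabs_pos | lra] | lra].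
Qed.


Lemma near_mu_cos_bounds f mu m : Ipi m -> (forall x, Ipi x -> f x <= f m) ->
  (forall x, Ipi x -> Rabs (f x - mu * cos x) <= Rabs mu / 8) ->
  (forall x, Ipi x -> Rabs (f x) <= Rabs mu + Rabs mu / 8) /\
  Rabs mu - Rabs mu / 8 <= f m <= Rabs mu + Rabs mu / 8.
Proof.
  intros Hm Hmax Hclose. pose proof PI_gt_3.
  assert (Hcos : forall x, Rabs (mu * cos x) <= Rabs mu).
  { intros x. rewrite Rabs_mult. pose proof (COS_bound x). pose proof (Rabs_pos mu).
    assert (Rabs (cos x) <= 1) by (apply Rabs_le; lra). nra. }
  assert (Hb : forall x, Ipi x -> Rabs (f x) <= Rabs mu + Rabs mu / 8).
  { intros x Hx. specialize (Hclose x Hx). specialize (Hcos x).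
    replace (f x) with ((f x - mu * cos x) + mu * cos x) by ring.
    eapply Rle_trans; [apply Rabs_triang | lra]. }
  split; auto. split; [| apply Rabs_le_between, Hb; auto].
  assert (Hpeak : exists p, Ipi p /\ mu * cos p = Rabs mu).
  { destruct (Rle_or_lt 0 mu).
    - exists 0. split; [unfold Ipi; lra|]. rewrite cos_0, Rmult_1_r, Rabs_right; lra.
    - exists PI. split; [unfold Ipi; lra|]. rewrite cos_PI, Rabs_left; lra. }
  destruct Hpeak as [p [Hp Hpv]].
  specialize (Hclose p Hp). rewrite Hpv in Hclose. apply Rabs_le_between in Hclose.
  pose proof (Hmax p Hp). lra.
Qed.

Section Solution.

Variables a ax adt : R -> R -> R.
Hypotheses
  (a_cont : cont_on_domain a)
  (ax_cont : cont_on_domain ax)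
  (a_mean_zero : forall t, 0 <= t -> RInt (a t) (- PI) PI = 0)
  (a_dx : forall t, 0 <= t -> deriv_on_Ipi (a t) (ax t))
  (a_dt : forall t x, 0 < t -> Ipi x -> is_derive (fun s => a s x) t (adt t x))
  (a_eq : forall t x, 0 < t -> Ipi x ->
     adt t x + RInt (a t) (- PI) x * ax t x - (a t x) ^ 2
     + / PI * RInt (fun y => (a t y) ^ 2) (- PI) PI = 0).

Definition vel t x := RInt (a t) (- PI) x.
Definition nonloc t := / PI * RInt (fun y => a t y ^ 2) (- PI) PI.

Lemma adt_eq t x : 0 < t -> Ipi x -> adt t x = a t x ^ 2 - nonloc t - vel t x * ax t x.
Proof. intros Ht Hx. specialize (a_eq t x Ht Hx). unfold nonloc, vel. lra. Qed.

Lemma a_slice_cont t : 0 <= t -> cont_Ipi (a t).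
Proof. apply cont_on_domain_slice, a_cont. Qed.

Lemma vel_endpoints t : 0 <= t -> vel t PI = 0 /\ vel t (- PI) = 0.
Proof.
  intros Ht. split; [apply a_mean_zero; auto|].
  apply (RInt_point (V := R_CompleteNormedModule)).
Qed.

Lemma vel_cont t : 0 <= t -> cont_Ipi (vel t).
Proof. intros Ht. apply primitive_cont_on, a_slice_cont, Ht. Qed.

Lemma sol_bounded T : 0 <= T -> exists K, 0 <= K /\
  forall s x, 0 <= s <= T -> Ipi x -> Rabs (a s x) <= K /\ Rabs (ax s x) <= K.
Proof.
  intros HT.
  destruct (cont_on_domain_bounded a T a_cont HT) as [K1 [HK1 H1]].
  destruct (cont_on_domain_bounded ax T ax_cont HT) as [K2 [HK2 H2]].
  exists (Rmax K1 K2). split; [eapply Rle_trans; [exact HK1 | apply Rmax_l]|].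
  intros s x Hs Hx. split.
  - eapply Rle_trans; [apply H1; auto | apply Rmax_l].
  - eapply Rle_trans; [apply H2; auto | apply Rmax_r].
Qed.

Lemma vel_time_lip t s e x : 0 <= t -> 0 <= s -> Ipi x ->
  (forall y, Ipi y -> Rabs (a s y - a t y) <= e) -> Rabs (vel s x - vel t x) <= 2 * PI * e.
Proof.
  intros Ht Hs Hx He. pose proof PI_gt_3. replace (2 * PI) with (PI - - PI) by ring.
  apply RInt_on_dist; auto using a_slice_cont; lra.
Qed.

Lemma vel_bounded t K x : 0 <= t -> Ipi x ->
  (forall y, Ipi y -> Rabs (a t y) <= K) -> Rabs (vel t x) <= 2 * PI * K.
Proof.
  intros Ht Hx HK. replace (2 * PI) with (PI - - PI) by ring.
  apply RInt_on_bound; auto using a_slice_cont.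
Qed.

Lemma nonloc_time_lip t s e K : 0 <= t -> 0 <= s ->
  (forall y, Ipi y -> Rabs (a s y - a t y) <= e) ->
  (forall y, Ipi y -> Rabs (a s y) <= K /\ Rabs (a t y) <= K) ->
  Rabs (nonloc s - nonloc t) <= 4 * K * e.
Proof.
  intros Ht Hs He HK. unfold nonloc. pose proof PI_gt_3.
  rewrite <- Rmult_minus_distr_l, Rabs_mult, Rabs_right by (left; apply Rinv_0_lt_compat; lra).
  assert (Rabs (RInt (fun y => a s y ^ 2) (- PI) PI - RInt (fun y => a t y ^ 2) (- PI) PI)
          <= (PI - - PI) * (2 * K * e)).
  { apply RInt_on_dist; auto using cont_on_pow2, a_slice_cont; try lra.
    intros y Hy. destruct (HK y Hy). apply sq_diff_bound; auto. }
  apply Rle_trans with (/ PI * ((PI - - PI) * (2 * K * e))).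
  - apply Rmult_le_compat_l; auto. left; apply Rinv_0_lt_compat; lra.
  - right. field. lra.
Qed.

Lemma adt_diff_bound t s x K e : 0 < t -> 0 < s -> Ipi x ->
  (forall y, Ipi y -> Rabs (a s y) <= K /\ Rabs (a t y) <= K) ->
  Rabs (ax s x) <= K -> Rabs (ax t x) <= K ->
  (forall y, Ipi y -> Rabs (a s y - a t y) <= e) -> Rabs (ax s x - ax t x) <= e ->
  Rabs (adt s x - adt t x) <= (6 + 4 * PI) * K * e.
Proof.
  intros Ht Hs Hx HK Haxs Haxt Hae Haxe.
  pose proof (nonloc_time_lip t s e K ltac:(lra) ltac:(lra) Hae HK) as Hc.
  pose proof (vel_time_lip t s e x ltac:(lra) ltac:(lra) Hx Hae) as Hu.
  assert (Hut : Rabs (vel t x) <= 2 * PI * K) by (apply vel_bounded; auto; try lra; apply HK).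
  pose proof (sq_diff_bound (a s x) (a t x) K e (proj1 (HK x Hx)) (proj2 (HK x Hx)) (Hae x Hx)) as Hsq.
  assert (Hprod : Rabs (vel s x * ax s x - vel t x * ax t x) <= 2 * PI * e * K + 2 * PI * K * e).
  { replace (vel s x * ax s x - vel t x * ax t x) with
      ((vel s x - vel t x) * ax s x + vel t x * (ax s x - ax t x)) by ring.
    eapply Rle_trans; [apply Rabs_triang|]. rewrite !Rabs_mult.
    apply Rplus_le_compat; apply Rmult_le_compat; auto; apply Rabs_pos. }
  rewrite (adt_eq s x Hs Hx), (adt_eq t x Ht Hx).
  replace (a s x ^ 2 - nonloc s - vel s x * ax s x - (a t x ^ 2 - nonloc t - vel t x * ax t x))
    with ((a s x ^ 2 - a t x ^ 2) - (nonloc s - nonloc t)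
          - (vel s x * ax s x - vel t x * ax t x)) by ring.
  apply Rabs_le_between in Hsq. apply Rabs_le_between in Hc. apply Rabs_le_between in Hprod.
  apply Rabs_le_between. lra.
Qed.

Lemma adt_time_cont t eta : 0 < t -> 0 < eta -> exists d, 0 < d /\
  forall s, 0 < s -> Rabs (s - t) < d -> forall x, Ipi x -> Rabs (adt s x - adt t x) < eta.
Proof.
  intros Ht He. pose proof PI_gt_3. pose proof PI_4.
  destruct (sol_bounded (t + 1) ltac:(lra)) as [K [HK HKb]].
  set (e := eta / (30 * K + 30)).
  assert (He0 : 0 < e) by (apply Rdiv_lt_0_compat; lra).
  destruct (cont_on_domain_time_unif a t e a_cont ltac:(lra) He0) as [d1 [Hd1 H1]].
  destruct (cont_on_domain_time_unif ax t e ax_cont ltac:(lra) He0) as [d2 [Hd2 H2]].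
  exists (Rmin 1 (Rmin d1 d2)). split; [repeat apply Rmin_pos; lra|].
  intros s Hs Hst x Hx.
  pose proof (Rmin_l 1 (Rmin d1 d2)). pose proof (Rmin_r 1 (Rmin d1 d2)).
  pose proof (Rmin_l d1 d2). pose proof (Rmin_r d1 d2).
  apply Rabs_lt_between in Hst as Hst'.
  eapply Rle_lt_trans; [apply (adt_diff_bound t s x K e); auto|].
  - intros y Hy. split; apply HKb; auto; lra.
  - apply HKb; auto; lra.
  - apply HKb; auto; lra.
  - intros y Hy. left. apply H1; auto; lra.
  - left. apply H2; auto; lra.
  - assert (e * (30 * K + 30) = eta) by (unfold e; field; lra). nra.
Qed.

Lemma a_time_increment t eta : 0 < t -> 0 < eta -> exists h0, 0 < h0 /\
  forall h, 0 < h < h0 -> forall x, Ipi x ->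
    Rabs (a (t + h) x - a t x - h * adt t x) <= h * eta /\
    a (t + h) x - a t x <= h * (adt (t + h) x + eta).
Proof.
  intros Ht He.
  destruct (adt_time_cont t (eta / 2) Ht ltac:(lra)) as [d [Hd Hcont]].
  exists d. split; auto. intros h Hh x Hx.
  destruct (MVT_gen (fun s => a s x) t (t + h) (fun s => adt s x)) as [xi [Hxi Hmvt]].
  - rewrite Rmin_left, Rmax_right by lra. intros s Hs. apply a_dt; auto; lra.
  - rewrite Rmin_left, Rmax_right by lra. intros s Hs. apply continuity_pt_filterlim.
    apply (ex_derive_continuous (K := R_AbsRing) (V := R_NormedModule) (fun s => a s x)).
    eexists. apply a_dt; auto; lra.
  - rewrite Rmin_left, Rmax_right in Hxi by lra.
    assert (A1 : Rabs (adt xi x - adt t x) < eta / 2)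
      by (apply Hcont; auto; [lra | apply Rabs_lt_between; lra]).
    assert (A2 : Rabs (adt (t + h) x - adt t x) < eta / 2)
      by (apply Hcont; auto; [lra | apply Rabs_lt_between; lra]).
    rewrite Hmvt. apply Rabs_lt_between in A1. apply Rabs_lt_between in A2. split.
    + replace (adt xi x * (t + h - t) - h * adt t x) with (h * (adt xi x - adt t x)) by ring.
      rewrite Rabs_mult, Rabs_right by lra. apply Rmult_le_compat_l; [lra|].
      apply Rabs_le_between. lra.
    + replace (t + h - t) with h by ring. nra.
Qed.

Lemma nonloc_time_cont t eta : 0 <= t -> 0 < eta -> exists d, 0 < d /\
  forall s, 0 <= s -> Rabs (s - t) < d -> Rabs (nonloc s - nonloc t) <= eta.
Proof.
  intros Ht He.
  destruct (sol_bounded (t + 1) ltac:(lra)) as [K [HK HKb]].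
  set (e := eta / (4 * K + 1)).
  assert (He0 : 0 < e) by (apply Rdiv_lt_0_compat; lra).
  destruct (cont_on_domain_time_unif a t e a_cont Ht He0) as [d1 [Hd1 H1]].
  exists (Rmin 1 d1). split; [apply Rmin_pos; lra|]. intros s Hs Hst.
  pose proof (Rmin_l 1 d1). pose proof (Rmin_r 1 d1).
  apply Rabs_lt_between in Hst as Hst'.
  eapply Rle_trans; [apply (nonloc_time_lip t s e K Ht Hs)|].
  - intros y Hy. left. apply H1; auto. lra.
  - intros y Hy. split; apply HKb; auto; lra.
  - assert (e * (4 * K + 1) = eta) by (unfold e; field; lra). nra.
Qed.

Section Maximum.

Variable xm : R -> R.
Hypothesis xm_max : forall t, 0 <= t -> Ipi (xm t) /\ forall x, Ipi x -> a t x <= a t (xm t).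

(* At an interior maximum [ax] vanishes; at the endpoints [vel] does. *)
Lemma transport_at_max t : 0 <= t -> vel t (xm t) * ax t (xm t) = 0.
Proof.
  intros Ht. destruct (xm_max t Ht) as [Hm Hmax]. destruct (vel_endpoints t Ht) as [E1 E2].
  destruct (Req_dec (xm t) PI) as [-> | H1]; [rewrite E1; ring|].
  destruct (Req_dec (xm t) (- PI)) as [-> | H2]; [rewrite E2; ring|].
  rewrite (deriv_on_Ipi_argmax (a t) (ax t) (xm t)); auto; [ring|].
  unfold Ipi in Hm. lra.
Qed.

Lemma max_time_cont t eta : 0 <= t -> 0 < eta -> exists d, 0 < d /\
  forall s, 0 <= s -> Rabs (s - t) < d -> Rabs (a s (xm s) - a t (xm t)) <= eta.
Proof.
  intros Ht He.
  destruct (cont_on_domain_time_unif a t eta a_cont Ht He) as [d [Hd H]].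
  exists d. split; auto. intros s Hs Hst.
  destruct (xm_max s Hs) as [Hs1 Hs2]. destruct (xm_max t Ht) as [Ht1 Ht2].
  pose proof (H s (xm s) Hs Hs1 Hst). pose proof (H s (xm t) Hs Ht1 Hst).
  pose proof (Hs2 (xm t) Ht1). pose proof (Ht2 (xm s) Hs1).
  apply Rabs_lt_between in H0. apply Rabs_lt_between in H1.
  apply Rabs_le_between. lra.
Qed.

(* Danskin-type bound: at the maximum the transport term drops out. *)
Lemma max_dini_upper t eta : 0 < t -> 0 < eta -> exists h0, 0 < h0 /\ forall h, 0 < h < h0 ->
  a (t + h) (xm (t + h)) - a t (xm t) <= h * (a t (xm t) ^ 2 - nonloc t + eta).
Proof.
  intros Ht He.
  destruct (sol_bounded (t + 1) ltac:(lra)) as [K [HK HKb]].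
  destruct (a_time_increment t (eta / 2) Ht ltac:(lra)) as [h1 [Hh1 Hinc]].
  set (e := eta / (4 * (2 * K + 1))).
  assert (He0 : 0 < e) by (apply Rdiv_lt_0_compat; lra).
  destruct (max_time_cont t e ltac:(lra) He0) as [d2 [Hd2 HM]].
  destruct (nonloc_time_cont t (eta / 4) ltac:(lra) ltac:(lra)) as [d3 [Hd3 HC]].
  exists (Rmin 1 (Rmin h1 (Rmin d2 d3))). split; [repeat apply Rmin_pos; lra|].
  intros h Hh.
  pose proof (Rmin_l 1 (Rmin h1 (Rmin d2 d3))). pose proof (Rmin_r 1 (Rmin h1 (Rmin d2 d3))).
  pose proof (Rmin_l h1 (Rmin d2 d3)). pose proof (Rmin_r h1 (Rmin d2 d3)).
  pose proof (Rmin_l d2 d3). pose proof (Rmin_r d2 d3).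
  destruct (xm_max (t + h) ltac:(lra)) as [Hm1 Hm2]. destruct (xm_max t ltac:(lra)) as [Hm3 Hm4].
  pose proof (transport_at_max (t + h) ltac:(lra)) as Htr.
  set (xh := xm (t + h)) in *.
  destruct (Hinc h ltac:(lra) xh Hm1) as [_ Hup].
  rewrite (adt_eq (t + h) xh ltac:(lra) Hm1), Htr in Hup.
  specialize (HM (t + h) ltac:(lra) ltac:(rewrite Rabs_right; lra)).
  specialize (HC (t + h) ltac:(lra) ltac:(rewrite Rabs_right; lra)).
  pose proof (sq_diff_bound (a (t + h) xh) (a t (xm t)) K e
                (proj1 (HKb (t + h) xh ltac:(lra) Hm1))
                (proj1 (HKb t (xm t) ltac:(lra) Hm3)) HM) as Hsq.
  apply Rabs_le_between in HC. apply Rabs_le_between in Hsq.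
  assert (e * (4 * (2 * K + 1)) = eta) by (unfold e; field; lra).
  pose proof (Hm4 xh Hm1). nra.
Qed.

Variable th : R.
Hypothesis th_pos : 0 < th.

Definition gap t x := a t (xm t) + th - a t x.
Definition lyap t := RInt (fun x => inv_root4 (gap t x)) (- PI) PI.

Lemma gap_ge t x : 0 <= t -> Ipi x -> th <= gap t x.
Proof. intros Ht Hx. destruct (xm_max t Ht) as [_ H]. specialize (H x Hx). unfold gap. lra. Qed.

Lemma gap_cont t : 0 <= t -> cont_Ipi (gap t).
Proof. intros Ht. apply cont_on_minus; auto using cont_on_const, a_slice_cont. Qed.

Lemma weight_cont t : 0 <= t -> cont_Ipi (fun x => inv_root4 (gap t x)).
Proof.
  intros Ht. apply (cont_on_comp _ _ (gap t)); auto using gap_cont.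
  intros x Hx. apply inv_root4_cont. pose proof (gap_ge t x Ht Hx). lra.
Qed.

Lemma d_weight_cont t : 0 <= t -> cont_Ipi (fun x => d_inv_root4 (gap t x)).
Proof.
  intros Ht. apply (cont_on_comp _ _ (gap t)); auto using gap_cont.
  intros x Hx. apply d_inv_root4_cont. pose proof (gap_ge t x Ht Hx). lra.
Qed.

Lemma rate_cont t : 0 <= t -> cont_Ipi (fun x => lyap_rate (a t (xm t)) (a t x) th).
Proof.
  intros Ht. apply (cont_on_comp _ _ (a t) (fun A => lyap_rate (a t (xm t)) A th));
    auto using a_slice_cont.
  intros x Hx. apply lyap_rate_cont. pose proof (gap_ge t x Ht Hx). unfold gap in *. lra.
Qed.

(* Integration by parts against [vel t], which vanishes at both ends and has
   derivative [a t]. *)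
Lemma transport_by_parts t : 0 <= t ->
  RInt (fun x => d_inv_root4 (gap t x) * vel t x * ax t x) (- PI) PI =
  RInt (fun x => a t x * inv_root4 (gap t x)) (- PI) PI.
Proof.
  intros Ht. pose proof PI_gt_3.
  assert (Cu := vel_cont t Ht). assert (Ca := a_slice_cont t Ht).
  assert (Cax := cont_on_domain_slice ax t ax_cont Ht).
  assert (CG := weight_cont t Ht). assert (Cg := d_weight_cont t Ht).
  assert (Cf1 : cont_Ipi (fun x => a t x * inv_root4 (gap t x))) by (apply cont_on_mult; auto).
  assert (Cf2 : cont_Ipi (fun x => vel t x * (d_inv_root4 (gap t x) * - ax t x)))
    by (apply cont_on_mult, cont_on_mult, cont_on_opp; auto).
  assert (Hftc : RInt (fun x => a t x * inv_root4 (gap t x)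
                                + vel t x * (d_inv_root4 (gap t x) * - ax t x)) (- PI) PI
                 = vel t PI * inv_root4 (gap t PI) - vel t (- PI) * inv_root4 (gap t (- PI))).
  { apply (RInt_derive_interior _ _ (fun x => vel t x * inv_root4 (gap t x))); try lra.
    - apply cont_on_mult; auto.
    - apply cont_on_plus; auto.
    - intros x Hx.
      assert (Hw : 0 < gap t x) by (pose proof (gap_ge t x Ht ltac:(unfold Ipi; lra)); lra).
      assert (Dg : is_derive (gap t) x (0 - ax t x)).
      { apply (is_derive_minus (K := R_AbsRing) (V := R_NormedModule)
                 (fun _ => a t (xm t) + th) (a t)).
        - apply (is_derive_const (K := R_AbsRing) (V := R_NormedModule)).
        - apply deriv_on_Ipi_interior; auto. }
      replace (a t x * inv_root4 (gap t x) + vel t x * (d_inv_root4 (gap t x) * - ax t x))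
        with (a t x * inv_root4 (gap t x) + vel t x * ((0 - ax t x) * d_inv_root4 (gap t x)))
        by ring.
      apply (is_derive_mult (K := R_AbsRing) (vel t) (fun y => inv_root4 (gap t y)));
        [| | intros; apply Rmult_comm].
      + apply (primitive_derive_interior (- PI) PI (a t)); auto.
      + apply (is_derive_comp (K := R_AbsRing) (V := R_NormedModule) inv_root4 (gap t));
          [apply inv_root4_derive | ]; auto. }
  destruct (vel_endpoints t Ht) as [E1 E2]. rewrite E1, E2, !Rmult_0_l, Rminus_0_r in Hftc.
  rewrite RInt_on_plus in Hftc by (auto; lra).
  rewrite (RInt_on_ext (fun x => vel t x * (d_inv_root4 (gap t x) * - ax t x))
             (fun x => - (d_inv_root4 (gap t x) * vel t x * ax t x))) in Hftc
    by (lra || (intros; ring)).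
  rewrite RInt_on_opp in Hftc by ((apply cont_on_mult; [apply cont_on_mult|]; auto) || lra). lra.
Qed.

Lemma lyap_time_cont t eta : 0 <= t -> 0 < eta -> exists d, 0 < d /\
  forall s, 0 <= s -> Rabs (s - t) < d -> Rabs (lyap s - lyap t) < eta.
Proof.
  intros Ht He. pose proof PI_gt_3.
  set (Lt := inv_root4 th / (4 * th)).
  assert (HLt : 0 < Lt) by (apply Rdiv_lt_0_compat; [apply inv_root4_pos | lra]).
  set (e := eta / (8 * PI * (Lt + 1))).
  assert (He0 : 0 < e) by (apply Rdiv_lt_0_compat; nra).
  destruct (cont_on_domain_time_unif a t e a_cont Ht He0) as [d1 [Hd1 H1]].
  destruct (max_time_cont t e Ht He0) as [d2 [Hd2 H2]].
  exists (Rmin d1 d2). split; [apply Rmin_pos; auto|]. intros s Hs Hst.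
  pose proof (Rmin_l d1 d2). pose proof (Rmin_r d1 d2).
  unfold lyap. eapply Rle_lt_trans.
  - apply (RInt_on_dist (- PI) PI _ _ (weight_cont s Hs) (weight_cont t Ht) ltac:(lra)
             (Lt * (2 * e)) PI); [lra|]. intros y Hy. eapply Rle_trans.
    + apply (inv_root4_lip th); auto; apply gap_ge; auto.
    + apply Rmult_le_compat_l; [lra|]. unfold gap.
      specialize (H2 s Hs ltac:(lra)). specialize (H1 s y Hs Hy ltac:(lra)).
      replace (a s (xm s) + th - a s y - (a t (xm t) + th - a t y))
        with ((a s (xm s) - a t (xm t)) - (a s y - a t y)) by ring.
      eapply Rle_trans; [apply Rabs_triang|]. rewrite Rabs_Ropp. lra.
  - assert (e * (8 * PI * (Lt + 1)) = eta) by (unfold e; field; nra). nra.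
Qed.

Lemma lyap_cont_on lo hi : 0 <= lo -> cont_on lyap lo hi.
Proof.
  intros Hlo t Ht eps He.
  destruct (lyap_time_cont t eps ltac:(lra) He) as [d [Hd H]].
  exists d. split; auto. intros s Hs Hst. apply H; auto. lra.
Qed.

Lemma lyap_upper t : 0 <= t -> lyap t <= 2 * PI * inv_root4 th.
Proof.
  intros Ht. pose proof PI_gt_3. unfold lyap.
  replace (2 * PI) with (PI - - PI) by ring.
  eapply Rle_trans; [apply Rle_abs | apply RInt_on_bound; auto using weight_cont; try lra].
  intros y Hy. rewrite Rabs_right by (left; apply inv_root4_pos).
  apply inv_root4_decr; auto. apply gap_ge; auto.
Qed.

Lemma weight_increment t h x eta : 0 < t -> 0 < h -> Ipi x ->
  a (t + h) (xm (t + h)) - a t (xm t) <= h * (a t (xm t) ^ 2 - nonloc t + eta) ->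
  Rabs (a (t + h) x - a t x - h * adt t x) <= h * eta ->
  inv_root4 (gap (t + h) x) - inv_root4 (gap t x) >=
    h * (d_inv_root4 (gap t x) * (a t (xm t) ^ 2 - a t x ^ 2 + vel t x * ax t x)
         - 2 * eta * (inv_root4 th / (4 * th))).
Proof.
  intros Ht Hh Hx HM Ha.
  pose proof (gap_ge t x ltac:(lra) Hx) as W1. pose proof (gap_ge (t + h) x ltac:(lra) Hx) as W2.
  pose proof (inv_root4_tangent (gap t x) (gap (t + h) x) ltac:(lra) ltac:(lra)) as Hcv.
  assert (0 <= h * eta) by (eapply Rle_trans; [apply Rabs_pos | exact Ha]).
  rewrite (adt_eq t x Ht Hx) in Ha. apply Rabs_le_between in Ha.
  destruct (d_inv_root4_bound th (gap t x) th_pos W1) as [g1 g2].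
  assert (Hd : gap (t + h) x - gap t x <=
               h * (a t (xm t) ^ 2 - a t x ^ 2 + vel t x * ax t x + 2 * eta)) by (unfold gap; nra).
  set (g := d_inv_root4 (gap t x)) in *.
  assert (g * (gap (t + h) x - gap t x) >=
          g * (h * (a t (xm t) ^ 2 - a t x ^ 2 + vel t x * ax t x + 2 * eta)))
    by (apply Rle_ge, Rmult_le_compat_neg_l; auto).
  nra.
Qed.

Lemma lyap_rate_integral t : 0 <= t ->
  RInt (fun x => d_inv_root4 (gap t x) * (a t (xm t) ^ 2 - a t x ^ 2 + vel t x * ax t x)) (- PI) PI
  = RInt (fun x => lyap_rate (a t (xm t)) (a t x) th) (- PI) PI.
Proof.
  intros Ht. pose proof PI_gt_3.
  assert (Cg := d_weight_cont t Ht). assert (CG := weight_cont t Ht).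
  assert (Ca := a_slice_cont t Ht). assert (Cu := vel_cont t Ht).
  assert (Cax := cont_on_domain_slice ax t ax_cont Ht).
  assert (C1 : cont_Ipi (fun x => d_inv_root4 (gap t x) * (a t (xm t) ^ 2 - a t x ^ 2)))
    by (apply cont_on_mult, cont_on_minus; auto using cont_on_const, cont_on_pow2).
  assert (C2 : cont_Ipi (fun x => d_inv_root4 (gap t x) * vel t x * ax t x))
    by (apply cont_on_mult; [apply cont_on_mult|]; auto).
  rewrite (RInt_on_ext _ (fun x => d_inv_root4 (gap t x) * (a t (xm t) ^ 2 - a t x ^ 2)
                                   + d_inv_root4 (gap t x) * vel t x * ax t x))
    by (lra || (intros; ring)).
  rewrite RInt_on_plus, transport_by_parts, <- RInt_on_plus by (auto using cont_on_mult; lra).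
  apply RInt_on_ext; [lra|]. intros x _. unfold lyap_rate, gap. ring.
Qed.

Lemma lyap_dini t : 0 < t ->
  dini_ge lyap t (RInt (fun x => lyap_rate (a t (xm t)) (a t x) th) (- PI) PI).
Proof.
  intros Ht eps He. pose proof PI_gt_3.
  set (Lt := inv_root4 th / (4 * th)).
  assert (HLt : 0 < Lt) by (apply Rdiv_lt_0_compat; [apply inv_root4_pos | lra]).
  set (eta := eps / (4 * PI * Lt + 1)).
  assert (He0 : 0 < eta) by (apply Rdiv_lt_0_compat; nra).
  destruct (max_dini_upper t eta Ht He0) as [h1 [Hh1 HM]].
  destruct (a_time_increment t eta Ht He0) as [h2 [Hh2 Ha]].
  exists (Rmin h1 h2). split; [apply Rmin_pos; auto|]. intros h Hh.
  pose proof (Rmin_l h1 h2). pose proof (Rmin_r h1 h2).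
  set (psi := fun x => d_inv_root4 (gap t x) * (a t (xm t) ^ 2 - a t x ^ 2 + vel t x * ax t x)).
  assert (Cpsi : cont_Ipi psi).
  { apply cont_on_mult; [apply d_weight_cont; lra|].
    apply cont_on_plus;
      [apply cont_on_minus; auto using cont_on_const, cont_on_pow2, a_slice_cont, Rlt_le|].
    apply cont_on_mult; [apply vel_cont | apply cont_on_domain_slice]; auto; lra. }
  assert (Hle : RInt (fun x => h * (psi x - 2 * eta * Lt)) (- PI) PI <= lyap (t + h) - lyap t).
  { unfold lyap. rewrite <- RInt_on_minus by ((apply weight_cont; lra) || lra).
    apply RInt_on_le; [| apply cont_on_minus; apply weight_cont | | intros x Hx]; try lra.
    - apply cont_on_mult; auto using cont_on_const, cont_on_minus.
    - apply Rge_le, (weight_increment t h x eta Ht ltac:(lra) Hx);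
        [apply HM; lra | apply (proj1 (Ha h ltac:(lra) x Hx))]. }
  rewrite RInt_on_scal, RInt_on_minus, RInt_on_const in Hle
    by (auto using cont_on_const, cont_on_minus; lra).
  unfold psi in Hle. rewrite lyap_rate_integral in Hle by lra.
  assert (eta * (4 * PI * Lt + 1) = eps) by (unfold eta; field; nra).
  apply Rle_ge. eapply Rle_trans; [|exact Hle]. apply Rmult_le_compat_l; [lra|]. nra.
Qed.

Lemma lyap_dini_affine t c d : 0 < t ->
  (forall x, Ipi x -> c * inv_root4 (gap t x) + d <= lyap_rate (a t (xm t)) (a t x) th) ->
  dini_ge lyap t (c * lyap t + 2 * PI * d).
Proof.
  intros Ht H. pose proof PI_gt_3.
  assert (Cw : cont_Ipi (fun x => c * inv_root4 (gap t x)))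
    by (apply cont_on_mult; [apply cont_on_const | apply weight_cont; lra]).
  apply (dini_ge_le _ _ (RInt (fun x => lyap_rate (a t (xm t)) (a t x) th) (- PI) PI));
    [| apply lyap_dini; lra].
  unfold lyap. rewrite <- RInt_on_scal by ((apply weight_cont; lra) || lra).
  replace (2 * PI * d) with ((PI - - PI) * d) by ring.
  rewrite <- RInt_on_const, <- RInt_on_plus by (auto using cont_on_const; lra).
  apply RInt_on_le; [apply cont_on_plus; auto using cont_on_const | apply rate_cont; lra | lra | auto].
Qed.

Lemma lyap_initial P del : 0 < del < PI ->
  (forall x, Ipi x -> a 0 x <= P) -> (forall x, - del <= x <= del -> a 0 x = P) ->
  2 * del * inv_root4 th <= lyap 0.
Proof.
  intros Hdel HP Hplat. pose proof PI_gt_3.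
  destruct (xm_max 0 (Rle_refl 0)) as [Hm1 Hm2].
  assert (HM0 : a 0 (xm 0) = P).
  { apply Rle_antisym; [apply HP; auto|]. rewrite <- (Hplat 0) by lra. apply Hm2. unfold Ipi; lra. }
  apply Rle_trans with (RInt (fun x => inv_root4 (gap 0 x)) (- del) del).
  - right. rewrite (RInt_on_ext _ (fun _ => inv_root4 th)), RInt_on_const; [ring | lra |].
    intros x Hx. unfold gap. rewrite HM0, Hplat by lra. f_equal. ring.
  - apply RInt_on_sub_le; try lra; [apply weight_cont; lra|].
    intros x _. left; apply inv_root4_pos.
Qed.

Lemma lyap_gronwall T K : 0 <= T -> (forall s x, 0 <= s <= T -> Ipi x -> Rabs (a s x) <= K) ->
  lyap 0 <= lyap T * exp ((3 * K + 1) * T).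
Proof.
  intros HT HK. pose proof PI_gt_3.
  assert (0 <= K).
  { specialize (HK 0 0 ltac:(lra) ltac:(unfold Ipi; lra)). pose proof Rabs_pos (a 0 0). lra. }
  pose proof (dini_gronwall lyap 0 T (- (3 * K + 1)) 0 HT ltac:(lra) (lyap_cont_on 0 T (Rle_refl 0)))
    as Hg.
  unfold Rdiv in Hg. rewrite Rmult_0_l, !Rplus_0_r, Rmult_0_r, exp_0, Rmult_1_r in Hg.
  replace (- - (3 * K + 1) * T) with ((3 * K + 1) * T) in Hg by ring.
  apply Hg. intros t Ht. destruct (xm_max t ltac:(lra)) as [Hm1 Hm2].
  replace (- (3 * K + 1) * lyap t + 0) with (- (3 * K + 1) * lyap t + 2 * PI * 0) by ring.
  apply lyap_dini_affine; [lra|]. intros x Hx. rewrite Rplus_0_r. apply Rge_le.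
  apply (lyap_rate_ge _ _ th K th_pos (Hm2 x Hx)); apply HK; auto; lra.
Qed.

Lemma lyap_late_growth T b L : 0 <= T <= b -> 0 < L ->
  (forall t, T <= t <= b -> (forall x, Ipi x -> Rabs (a t x) <= L + L / 8) /\
                           L - L / 8 <= a t (xm t) <= L + L / 8) ->
  (lyap T - late_shift L) * exp (L / 4 * (b - T)) <= lyap b - late_shift L.
Proof.
  intros HTb HL Hlate. pose proof PI_gt_3.
  pose proof (dini_gronwall lyap T b (L / 4) (- (2 * PI * late_loss L)) ltac:(lra) ltac:(lra)
                (lyap_cont_on T b ltac:(lra))) as Hg.
  replace (- (2 * PI * late_loss L) / (L / 4)) with (- late_shift L) in Hg
    by (unfold late_shift; field; lra).
  assert (Hexp : exp (- (L / 4) * b) * exp (L / 4 * (b - T)) = exp (- (L / 4) * T))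
    by (rewrite <- exp_plus; f_equal; ring).
  rewrite <- Hexp in Hg.
  apply Rmult_le_reg_l with (exp (- (L / 4) * b)); [apply exp_pos|]. rewrite <- Rmult_assoc.
  rewrite (Rmult_comm (exp (- (L / 4) * b)) (lyap T - late_shift L)), (Rmult_comm _ (lyap b - _)).
  eapply Rle_trans; [|apply Hg]; [right; ring|].
  intros t Ht. destruct (xm_max t ltac:(lra)) as [Hm1 Hm2]. destruct (Hlate t ltac:(lra)) as [Hb HM].
  replace (- (2 * PI * late_loss L)) with (2 * PI * - late_loss L) by ring.
  apply lyap_dini_affine; [lra|]. intros x Hx. apply Rge_le.
  pose proof (lyap_rate_ge_late _ _ th L th_pos HL (Hm2 x Hx) HM (Hb x Hx)).
  unfold gap. lra.
Qed.

End Maximum.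

Lemma plateau_no_convergence P del mu : 0 < del < PI -> mu <> 0 ->
  (forall x, Ipi x -> a 0 x <= P) -> (forall x, - del <= x <= del -> a 0 x = P) ->
  ~ converges_to_mu_cos a mu.
Proof.
  intros Hdel Hmu HP Hplat Hconv. pose proof PI_gt_3.
  destruct (cont_on_domain_argmax a a_cont) as [xm Hxm].
  set (L := Rabs mu). assert (HL : 0 < L) by (apply Rabs_pos_lt; auto).
  destruct (Hconv (L / 8) ltac:(lra)) as [T0 HT0].
  set (T := Rmax T0 0). assert (HT : 0 <= T) by apply Rmax_r. assert (T0 <= T) by apply Rmax_l.
  assert (Hlate : forall t, T <= t -> (forall x, Ipi x -> Rabs (a t x) <= L + L / 8) /\
                                   L - L / 8 <= a t (xm t) <= L + L / 8).
  { intros t Ht. destruct (Hxm t ltac:(lra)) as [Hm1 Hm2].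
    apply near_mu_cos_bounds; auto. intros x Hx. apply HT0; auto. lra. }
  destruct (sol_bounded T HT) as [K [HK HKb]].
  pose proof (late_shift_nonneg L HL) as HQ.
  (* [th] is so small that the initial value [2 del Z] of the functional survives
     the loss on [[0, T]], after which exponential growth at rate [L / 4] beats
     the a priori bound [2 pi Z] by time [b]. *)
  set (Z := (late_shift L + 1) * exp ((3 * K + 1) * T) / (2 * del) + 1).
  assert (HZ0 : 0 < (late_shift L + 1) * exp ((3 * K + 1) * T) / (2 * del))
    by (apply Rdiv_lt_0_compat; [apply Rmult_lt_0_compat; [lra | apply exp_pos] | lra]).
  assert (HZ : 0 < Z) by (unfold Z; lra).
  set (th := / Z ^ 4).
  assert (Hth : 0 < th) by (apply Rinv_0_lt_compat, pow_lt, HZ).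
  assert (HGth : inv_root4 th = Z) by (apply inv_root4_inv_pow4, HZ).
  set (b := T + 8 * PI * Z / L).
  assert (Hb : L / 4 * (b - T) = 2 * PI * Z) by (unfold b; field; lra).
  assert (HbT : T <= b) by (unfold b; assert (0 <= 8 * PI * Z / L) by
    (apply Rmult_le_pos; [nra | left; apply Rinv_0_lt_compat; lra]); lra).
  pose proof (lyap_initial xm Hxm th Hth P del Hdel HP Hplat) as Hinit.
  pose proof (lyap_gronwall xm Hxm th Hth T K HT (fun s x Hs Hx => proj1 (HKb s x Hs Hx))) as Hgr.
  pose proof (lyap_late_growth xm Hxm th Hth T b L ltac:(lra) HL
                (fun t Ht => Hlate t (proj1 Ht))) as Hgrow.
  pose proof (lyap_upper xm Hxm th Hth b ltac:(lra)) as Hup.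
  rewrite HGth in Hinit, Hup.
  assert (HIT : late_shift L + 1 <= lyap xm th T).
  { assert (Hpos := exp_pos ((3 * K + 1) * T)).
    assert (2 * del * Z = (late_shift L + 1) * exp ((3 * K + 1) * T) + 2 * del)
      by (unfold Z; field; lra).
    nra. }
  pose proof (exp_ineq1_le (L / 4 * (b - T))). rewrite Hb in *.
  assert (Hpos := exp_pos (2 * PI * Z)).
  nra.
Qed.

End Solution.

Lemma flat_crest_no_convergence a a0 P del mu : 0 < del < PI -> mu <> 0 ->
  (forall x, Ipi x -> a0 x <= P) -> (forall x, - del <= x <= del -> a0 x = P) ->
  global_solution a a0 -> ~ converges_to_mu_cos a mu.
Proof.
  intros Hdel Hmu HP Hcrest [Ha0 [Ha [Hmean [ax [adt [Hdx [Hax [Hdt Heq]]]]]]]].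
  pose proof PI_gt_3.
  apply (plateau_no_convergence a ax adt Ha Hax Hmean Hdx Hdt Heq P del mu Hdel Hmu).
  - intros x Hx. rewrite Ha0; auto.
  - intros x Hx. rewrite Ha0; [auto | unfold Ipi; lra].
Qed.

Lemma Rpower_gt_0 x y : 0 < Rpower x y.
Proof. apply exp_pos. Qed.

Lemma le_scaled_Rpower r c s : 0 < r <= c -> 1 <= c -> 0 <= s <= 1 -> r <= c * Rpower r s.
Proof.
  intros Hr Hc Hs.
  rewrite <- (Rpower_1 r) at 1 by lra. replace 1 with ((1 - s) + s) at 1 by ring.
  rewrite Rpower_plus. apply Rmult_le_compat_r; [left; apply Rpower_gt_0|].
  apply Rle_trans with (Rpower c (1 - s)); [apply Rle_Rpower_l; lra|].
  rewrite <- (Rpower_1 c) at 2 by lra. apply Rle_Rpower; lra.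
Qed.

Lemma le_Rpower_base_le_1 x y : 0 < x <= 1 -> 0 <= y < 1 -> x <= Rpower x y.
Proof.
  intros Hx Hy. rewrite <- (Rpower_1 x) at 1 by lra. unfold Rpower.
  assert (ln x <= 0) by (rewrite <- ln_1; apply ln_le; lra).
  destruct (Req_dec (ln x) 0) as [E | Hne]; [rewrite E, !Rmult_0_r; lra|].
  left. apply exp_increasing. nra.
Qed.

Lemma Rmin_le_interp d r al : 0 < d -> 0 < r -> 0 <= al <= 1 ->
  Rmin d r <= Rpower d (1 - al) * Rpower r al.
Proof.
  intros Hd Hr Hal. unfold Rmin. destruct Rle_dec as [Hdr|Hrd].
  - rewrite <- (Rpower_1 d) at 1 by lra. replace 1 with ((1 - al) + al) at 1 by ring.
    rewrite Rpower_plus. apply Rmult_le_compat_l; [left; apply Rpower_gt_0|].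
    apply Rle_Rpower_l; lra.
  - rewrite <- (Rpower_1 r) at 1 by lra. replace 1 with ((1 - al) + al) at 1 by ring.
    rewrite Rpower_plus. apply Rmult_le_compat_r; [left; apply Rpower_gt_0|].
    apply Rle_Rpower_l; lra.
Qed.

Lemma lipschitz_of_derive f df a b B :
  (forall z, Rmin a b <= z <= Rmax a b -> is_derive f z (df z)) ->
  (forall z, Rmin a b <= z <= Rmax a b -> Rabs (df z) <= B) ->
  Rabs (f b - f a) <= B * Rabs (b - a).
Proof.
  intros Hd HB. destruct (MVT_gen f a b df) as [c [Hc Heq]].
  - intros; apply Hd; lra.
  - intros z Hz. apply continuity_pt_filterlim.
    apply (ex_derive_continuous (K := R_AbsRing) (V := R_NormedModule) f). eexists. apply Hd; auto.
  - rewrite Heq, Rabs_mult. apply Rmult_le_compat_r; [apply Rabs_pos | apply HB; auto].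
Qed.

Lemma sin_lipschitz x y : Rabs (sin y - sin x) <= Rabs (y - x).
Proof.
  rewrite <- (Rmult_1_l (Rabs (y - x))). apply (lipschitz_of_derive sin cos).
  - intros; apply is_derive_Reals, derivable_pt_lim_sin.
  - intros; apply Rabs_le, COS_bound.
Qed.

Lemma cos_lipschitz x y : Rabs (cos y - cos x) <= Rabs (y - x).
Proof.
  rewrite <- (Rmult_1_l (Rabs (y - x))). apply (lipschitz_of_derive cos (fun z => - sin z)).
  - intros; apply is_derive_Reals, derivable_pt_lim_cos.
  - intros; rewrite Rabs_Ropp; apply Rabs_le, SIN_bound.
Qed.

Lemma cos_taylor1 u v : Rabs (cos v - cos u + sin u * (v - u)) <= (v - u) ^ 2.
Proof.
  destruct (MVT_gen cos u v (fun z => - sin z)) as [c [Hc Heq]].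
  - intros; apply is_derive_Reals, derivable_pt_lim_cos.
  - intros. apply derivable_continuous_pt, derivable_pt_cos.
  - rewrite Heq. replace (- sin c * (v - u) + sin u * (v - u)) with ((sin u - sin c) * (v - u)) by ring.
    rewrite Rabs_mult, <- (pow2_abs (v - u)).
    assert (Rabs (sin u - sin c) <= Rabs (v - u)).
    { eapply Rle_trans; [apply sin_lipschitz|].
      unfold Rmin, Rmax in Hc. destruct Rle_dec; split_Rabs; lra. }
    pose proof (Rabs_pos (v - u)). pose proof (Rabs_pos (sin u - sin c)). nra.
Qed.

(* The datum [cos] with its crest flattened: [cos x] is replaced by [1] on [[-del, del]],
   and the two remaining arcs are compressed to keep the period [2 pi]; the
   constant [del / pi] restores zero mean. *)
Definition soft_threshold (del x : R) : R := x - clamp (- del) del x.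
Definition stretch (del : R) : R := PI / (PI - del).
Definition plateau_datum (del x : R) : R := cos (stretch del * soft_threshold del x) - del / PI.
Definition plateau_dev' (del x : R) : R :=
  sin x - stretch del * sin (stretch del * soft_threshold del x).

Lemma soft_threshold_mid del x : - del <= x <= del -> soft_threshold del x = 0.
Proof. intros. unfold soft_threshold. rewrite clamp_id; auto; ring. Qed.

Lemma soft_threshold_right del x : 0 < del -> del <= x -> soft_threshold del x = x - del.
Proof. intros. unfold soft_threshold, clamp, Rmax, Rmin. repeat destruct Rle_dec; lra. Qed.

Lemma soft_threshold_left del x : 0 < del -> x <= - del -> soft_threshold del x = x + del.
Proof. intros. unfold soft_threshold, clamp, Rmax, Rmin. repeat destruct Rle_dec; lra. Qed.

Lemma soft_threshold_lipschitz del x y : 0 < del ->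
  Rabs (soft_threshold del y - soft_threshold del x) <= Rabs (y - x).
Proof. intros. unfold soft_threshold, clamp, Rmax, Rmin. repeat destruct Rle_dec; split_Rabs; lra. Qed.

Section Plateau.

Variable del : R.
Hypothesis Hdel : 0 < del <= 1.

Let lam := stretch del.

Lemma stretch_bounds : 1 <= lam <= 3 / 2 /\ lam - 1 <= del / 2 /\ lam * (PI - del) = PI.
Proof.
  pose proof PI_gt_3. unfold lam, stretch.
  assert (E : PI / (PI - del) = 1 + del / (PI - del)) by (field; lra).
  assert (0 <= del / (PI - del) <= del / 2).
  { split; [apply Rmult_le_pos; [lra | left; apply Rinv_0_lt_compat; lra]|].
    apply Rmult_le_compat_l; [lra|]. apply Rinv_le_contravar; lra. }
  repeat split; try lra. field. lra.
Qed.

Lemma stretch_soft_close x : Ipi x -> Rabs (lam * soft_threshold del x - x) <= del.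
Proof.
  intros Hx. pose proof PI_gt_3. destruct stretch_bounds as [[L1 L2] [L3 L4]].
  unfold Ipi in Hx. apply Rabs_le.
  destruct (Rle_dec del x).
  - rewrite soft_threshold_right by lra. split; nra.
  - destruct (Rle_dec x (- del)).
    + rewrite soft_threshold_left by lra. split; nra.
    + rewrite soft_threshold_mid by lra. lra.
Qed.

(* [sin] vanishes where [soft_threshold] has its kinks, so that [crest_derivable]
   holds there too, through the first-order Taylor bound for [cos]. *)
Lemma soft_threshold_kink x : exists d0, 0 < d0 /\ forall h, Rabs h < d0 ->
  sin (lam * soft_threshold del x) * (soft_threshold del (x + h) - soft_threshold del x)
  = sin (lam * soft_threshold del x) * h.
Proof.
  destruct (Rle_dec (Rabs x) del) as [Hle|Hgt].
  - exists 1. split; [lra|]. intros h _. apply Rabs_le_between in Hle.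
    rewrite (soft_threshold_mid del x) by lra. rewrite Rmult_0_r, sin_0. ring.
  - apply Rnot_le_lt in Hgt. exists (Rabs x - del). split; [lra|]. intros h Hh.
    apply Rabs_lt_between in Hh. destruct (Rle_dec 0 x).
    + rewrite Rabs_right in Hh, Hgt by lra. rewrite !soft_threshold_right by lra. f_equal. ring.
    + rewrite Rabs_left in Hh, Hgt by lra. rewrite !soft_threshold_left by lra. f_equal. ring.
Qed.

Lemma crest_derivable x :
  derivable_pt_lim (fun y => cos (lam * soft_threshold del y)) x
    (- lam * sin (lam * soft_threshold del x)).
Proof.
  intros eps He. destruct stretch_bounds as [[L1 L2] [L3 L4]].
  destruct (soft_threshold_kink x) as [d0 [Hd0 Hlin]].
  assert (Hm : 0 < Rmin d0 (eps / (lam ^ 2 + 1)))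
    by (apply Rmin_pos; auto; apply Rdiv_lt_0_compat; nra).
  exists (mkposreal _ Hm). intros h Hh0 Hh. change (Rabs h < Rmin d0 (eps / (lam ^ 2 + 1))) in Hh.
  pose proof (Rmin_l d0 (eps / (lam ^ 2 + 1))). pose proof (Rmin_r d0 (eps / (lam ^ 2 + 1))).
  set (u := lam * soft_threshold del x) in *. set (v := lam * soft_threshold del (x + h)).
  assert (Huv : Rabs (v - u) <= lam * Rabs h).
  { unfold u, v. rewrite <- Rmult_minus_distr_l, Rabs_mult, (Rabs_right lam) by lra.
    apply Rmult_le_compat_l; [lra|]. replace h with (x + h - x) at 2 by ring.
    apply soft_threshold_lipschitz; lra. }
  assert (Hsv : sin u * (v - u) = lam * (sin u * h)).
  { rewrite <- (Hlin h) by lra. unfold v, u. ring. }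
  replace ((cos v - cos u) / h - - lam * sin u) with ((cos v - cos u + sin u * (v - u)) / h)
    by (rewrite Hsv; field; auto).
  assert (0 < Rabs h) by (apply Rabs_pos_lt; auto).
  unfold Rdiv. rewrite Rabs_mult, Rabs_inv.
  apply Rle_lt_trans with ((v - u) ^ 2 * / Rabs h);
    [apply Rmult_le_compat_r; [left; apply Rinv_0_lt_compat; auto | apply cos_taylor1]|].
  assert ((v - u) ^ 2 <= lam ^ 2 * Rabs h * Rabs h).
  { rewrite <- (pow2_abs (v - u)). pose proof (Rabs_pos (v - u)). nra. }
  apply Rle_lt_trans with (lam ^ 2 * Rabs h).
  { apply Rmult_le_reg_r with (Rabs h); auto. rewrite Rmult_assoc, Rinv_l by lra. lra. }
  assert ((lam ^ 2 + 1) * (eps / (lam ^ 2 + 1)) = eps) by (field; nra).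
  nra.
Qed.

Lemma plateau_datum_derivable x :
  derivable_pt_lim (plateau_datum del) x (- lam * sin (lam * soft_threshold del x) - 0).
Proof.
  apply (derivable_pt_lim_minus _ (fun _ => del / PI));
    [apply crest_derivable | apply derivable_pt_lim_const].
Qed.

Lemma plateau_dev_derivable x :
  derivable_pt_lim (fun y => plateau_datum del y - cos y) x (plateau_dev' del x).
Proof.
  unfold plateau_dev'. fold lam.
  replace (sin x - lam * sin (lam * soft_threshold del x))
    with ((- lam * sin (lam * soft_threshold del x) - 0) - - sin x) by ring.
  apply (derivable_pt_lim_minus (plateau_datum del) cos);
    [apply plateau_datum_derivable | apply derivable_pt_lim_cos].
Qed.

Lemma plateau_datum_cont x : continuity_pt (plateau_datum del) x.
Proof.
  apply derivable_continuous_pt. eexists. apply plateau_datum_derivable.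
Qed.

Lemma plateau_datum_le x : plateau_datum del x <= 1 - del / PI.
Proof. unfold plateau_datum. pose proof (COS_bound (stretch del * soft_threshold del x)). lra. Qed.

Lemma plateau_datum_crest x : - del <= x <= del -> plateau_datum del x = 1 - del / PI.
Proof. intros Hx. unfold plateau_datum. rewrite soft_threshold_mid, Rmult_0_r, cos_0 by auto. ring. Qed.

Lemma plateau_datum_mean_zero : RInt (plateau_datum del) (- PI) PI = 0.
Proof.
  change (RInt (plateau_datum del) (- PI) PI = 0 :> R).
  pose proof PI_gt_3. destruct stretch_bounds as [[L1 L2] [L3 L4]].
  assert (Cd : cont_on (plateau_datum del) (- PI) PI)
    by (apply continuous_cont_on, plateau_datum_cont).
  rewrite (RInt_on_Chasles3 _ (- PI) (- del) del PI) by (auto; lra).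
  rewrite (RInt_on_ext _ (fun x => cos (lam * (x + del)) - del / PI) (- PI) (- del)),
          (RInt_on_ext _ (fun _ => 1 - del / PI) (- del) del),
          (RInt_on_ext _ (fun x => cos (lam * (x - del)) - del / PI) del PI), RInt_on_const;
    try lra; try (intros x Hx; unfold plateau_datum; fold lam).
  - rewrite (RInt_of_derive (fun x => sin (lam * (x + del)) / lam - del / PI * x)),
            (RInt_of_derive (fun x => sin (lam * (x - del)) / lam - del / PI * x)).
    + replace (lam * (- del + del)) with 0 by ring. replace (lam * (del - del)) with 0 by ring.
      replace (lam * (- PI + del)) with (- PI) by lra. replace (lam * (PI - del)) with PI by lra.
      rewrite sin_0, sin_neg, sin_PI. field. lra.
    + intros x. auto_derive; auto. unfold Rminus. field. lra.
    + intros x. apply derivable_continuous_pt, ex_derive_Reals_0. auto_derive. auto.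
    + intros x. auto_derive; auto. unfold Rminus. field. lra.
    + intros x. apply derivable_continuous_pt, ex_derive_Reals_0. auto_derive. auto.
  - rewrite soft_threshold_right by lra. reflexivity.
  - rewrite soft_threshold_mid, Rmult_0_r, cos_0 by lra. reflexivity.
  - rewrite soft_threshold_left by lra. reflexivity.
Qed.

Lemma plateau_dev_sup x : Ipi x -> Rabs (plateau_datum del x - cos x) <= 2 * del.
Proof.
  intros Hx. pose proof PI_gt_3. unfold plateau_datum. fold lam.
  pose proof (cos_lipschitz x (lam * soft_threshold del x)). pose proof (stretch_soft_close x Hx).
  assert (0 < del / PI <= del).
  { split; [apply Rdiv_lt_0_compat; lra|].
    apply Rmult_le_reg_r with PI; [lra|]. unfold Rdiv. rewrite Rmult_assoc, Rinv_l; nra. }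
  replace (cos (lam * soft_threshold del x) - del / PI - cos x)
    with ((cos (lam * soft_threshold del x) - cos x) - del / PI) by ring.
  eapply Rle_trans; [apply Rabs_triang|]. rewrite Rabs_Ropp, (Rabs_right (del / PI)); lra.
Qed.

Lemma plateau_dev'_sup x : Ipi x -> Rabs (plateau_dev' del x) <= 2 * del.
Proof.
  intros Hx. destruct stretch_bounds as [[L1 L2] [L3 L4]]. unfold plateau_dev'. fold lam.
  pose proof (sin_lipschitz x (lam * soft_threshold del x)). pose proof (stretch_soft_close x Hx).
  pose proof (SIN_bound (lam * soft_threshold del x)).
  replace (sin x - lam * sin (lam * soft_threshold del x)) with
    (- (sin (lam * soft_threshold del x) - sin x) - (lam - 1) * sin (lam * soft_threshold del x))
    by ring.
  eapply Rle_trans; [apply Rabs_triang|].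
  rewrite Rabs_Ropp, Rabs_Ropp, Rabs_mult, (Rabs_right (lam - 1)) by lra.
  assert (Rabs (sin (lam * soft_threshold del x)) <= 1) by (apply Rabs_le; lra).
  nra.
Qed.

Lemma plateau_dev'_lipschitz x y :
  Rabs (plateau_dev' del x - plateau_dev' del y) <= 5 * Rabs (x - y).
Proof.
  destruct stretch_bounds as [[L1 L2] [L3 L4]]. unfold plateau_dev'. fold lam.
  set (sx := sin (lam * soft_threshold del x)). set (sy := sin (lam * soft_threshold del y)).
  replace (sin x - lam * sx - (sin y - lam * sy)) with ((sin x - sin y) - lam * (sx - sy)) by ring.
  eapply Rle_trans; [apply Rabs_triang|]. rewrite Rabs_Ropp, Rabs_mult, (Rabs_right lam) by lra.
  pose proof (sin_lipschitz y x).
  pose proof (sin_lipschitz (lam * soft_threshold del y) (lam * soft_threshold del x)) as Hs.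
  rewrite <- Rmult_minus_distr_l, Rabs_mult, (Rabs_right lam) in Hs by lra. fold sx sy in Hs.
  pose proof (soft_threshold_lipschitz del y x ltac:(lra)).
  pose proof (Rabs_pos (x - y)). pose proof (Rabs_pos (soft_threshold del x - soft_threshold del y)).
  assert (Rabs (sx - sy) <= lam * Rabs (x - y)) by nra.
  assert (lam * Rabs (sx - sy) <= lam * lam * Rabs (x - y))
    by (rewrite Rmult_assoc; apply Rmult_le_compat_l; lra).
  assert (lam * lam * Rabs (x - y) <= 9 / 4 * Rabs (x - y)) by (apply Rmult_le_compat_r; nra).
  lra.
Qed.

Lemma plateau_dev_lipschitz x y : Ipi x -> Ipi y ->
  Rabs (plateau_datum del x - cos x - (plateau_datum del y - cos y)) <= 2 * del * Rabs (x - y).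
Proof.
  intros Hx Hy.
  apply (lipschitz_of_derive (fun z => plateau_datum del z - cos z) (plateau_dev' del) y x).
  - intros z _. apply is_derive_Reals, plateau_dev_derivable.
  - intros z Hz. apply plateau_dev'_sup. unfold Ipi, Rmin, Rmax in *. destruct Rle_dec; lra.
Qed.

End Plateau.

Lemma holder_norm_le_weaken s f sig sig' :
  sig <= sig' -> holder_norm_le s f sig -> holder_norm_le s f sig'.
Proof.
  intros Hle [[Hs [A [C [H1 [H2 H3]]]]] | [Hs [g [A [B [C [H1 [H2 [H3 [H4 H5]]]]]]]]]].
  - left. split; auto. exists A, C. repeat split; auto. lra.
  - right. split; auto. exists g, A, B, C. repeat split; auto. lra.
Qed.

Lemma plateau_holder_le_1 del s : 0 < del <= 1 -> 0 < s <= 1 ->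
  holder_norm_le s (fun x => plateau_datum del x - cos x) (18 * del).
Proof.
  intros Hdel Hs. pose proof PI_gt_3. pose proof PI_4.
  left. split; [lra|]. exists (2 * del), (2 * del * (2 * PI)). repeat split.
  - intros x Hx. apply plateau_dev_sup; auto.
  - intros x y Hx Hy Hxy. eapply Rle_trans; [apply plateau_dev_lipschitz; auto|].
    apply Rle_trans with (2 * del * (2 * PI * Rpower (Rabs (x - y)) s)); [|right; ring].
    apply Rmult_le_compat_l; [lra|]. apply le_scaled_Rpower; [| lra | lra].
    split; [apply Rabs_pos_lt; lra | unfold Ipi in *; split_Rabs; lra].
  - nra.
Qed.

Lemma plateau_holder_gt_1 del s : 0 < del <= 1 -> 1 < s < 2 ->
  holder_norm_le s (fun x => plateau_datum del x - cos x) (9 * Rpower del (2 - s)).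
Proof.
  intros Hdel Hs.
  pose proof (le_Rpower_base_le_1 del (2 - s) Hdel ltac:(lra)).
  right. split; [lra|]. exists (plateau_dev' del), (2 * del), (2 * del), (5 * Rpower del (2 - s)).
  repeat split.
  - apply deriv_on_Ipi_of_derivable. intros x. apply plateau_dev_derivable; auto.
  - intros x Hx. apply plateau_dev_sup; auto.
  - intros x Hx. apply plateau_dev'_sup; auto.
  - intros x y Hx Hy Hxy.
    assert (Hr : 0 < Rabs (x - y)) by (apply Rabs_pos_lt; lra).
    pose proof (Rmin_le_interp del (Rabs (x - y)) (s - 1) ltac:(lra) Hr ltac:(lra)) as Hint.
    replace (1 - (s - 1)) with (2 - s) in Hint by ring.
    pose proof (plateau_dev'_lipschitz del Hdel x y).
    pose proof (plateau_dev'_sup del Hdel x Hx). pose proof (plateau_dev'_sup del Hdel y Hy).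
    assert (Rabs (plateau_dev' del x - plateau_dev' del y) <= 4 * del).
    { eapply Rle_trans; [apply Rabs_triang|]. rewrite Rabs_Ropp. lra. }
    assert (Rabs (plateau_dev' del x - plateau_dev' del y) <= 5 * Rmin del (Rabs (x - y))).
    { unfold Rmin. destruct Rle_dec; lra. }
    pose proof (Rpower_gt_0 (Rabs (x - y)) (s - 1)). nra.
  - lra.
Qed.

Lemma plateau_holder_small eps sigma : 0 < eps < 2 -> 0 < sigma -> exists del, 0 < del <= 1 /\
  holder_norm_le (2 - eps) (fun x => plateau_datum del x - cos x) sigma.
Proof.
  intros Heps Hsig. destruct (Rle_dec (2 - eps) 1) as [Hs|Hs].
  - exists (Rmin (sigma / 18) 1).
    assert (0 < Rmin (sigma / 18) 1 <= 1) by (split; [apply Rmin_pos | apply Rmin_r]; lra).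
    split; auto. eapply holder_norm_le_weaken; [|apply plateau_holder_le_1; auto; lra].
    pose proof (Rmin_l (sigma / 18) 1). lra.
  - set (s2 := Rmin (sigma / 9) (1 / 2)).
    assert (Hs2 : 0 < s2 < 1).
    { split; [apply Rmin_pos; lra|]. apply Rle_lt_trans with (1 / 2); [apply Rmin_r | lra]. }
    exists (Rpower s2 (/ eps)).
    assert (Hdel : 0 < Rpower s2 (/ eps) <= 1).
    { split; [apply Rpower_gt_0|]. unfold Rpower. rewrite <- exp_0.
      assert (ln s2 < 0) by (rewrite <- ln_1; apply ln_increasing; lra).
      assert (0 < / eps) by (apply Rinv_0_lt_compat; lra).
      left. apply exp_increasing. nra. }
    split; auto. eapply holder_norm_le_weaken; [|apply plateau_holder_gt_1; auto; lra].
    replace (2 - (2 - eps)) with eps by ring.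
    rewrite Rpower_mult, Rinv_l, Rpower_1 by lra.
    assert (s2 <= sigma / 9) by apply Rmin_l. lra.
Qed.

Theorem theorem1p5 :
  forall eps sigma : R, 0 < eps < 2 -> 0 < sigma ->
  exists a0 : R -> R,
    RInt a0 (- PI) PI = 0 /\
    holder_norm_le (2 - eps) (fun x => a0 x - cos x) sigma /\
    forall mu : R, mu <> 0 ->
      ~ (exists a : R -> R -> R, global_solution a a0 /\ converges_to_mu_cos a mu).
Proof.
  intros eps sigma Heps Hsig. pose proof PI_gt_3.
  destruct (plateau_holder_small eps sigma Heps Hsig) as [del [Hdel Hholder]].
  exists (plateau_datum del). split; [apply plateau_datum_mean_zero; auto|]. split; [exact Hholder|].
  intros mu Hmu [a [Hsol Hconv]].
  apply (flat_crest_no_convergence a (plateau_datum del) (1 - del / PI) del mu); auto; try lra.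
  - intros x _. apply plateau_datum_le.
  - apply plateau_datum_crest; lra.
Qed.
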